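(* Let $\hat K=[0,1]^2$ with centroid $(x_{\hat K},y_{\hat K})=(1/2,1/2)$, let $\kappa>0$, and let $\epsilon$ be a real, strictly positive, smooth function on $\hat K$. Let $n\in\mathbb{N}$ with $n\ge2$, $p=2n+1$ and $q\ge n+1$. Then there is a constant $C$ independent of $\kappa$ (but possibly depending on $p$) such that $$\inf_{v\in GPW_\kappa^{p,q}(\hat K)}\|f-v\|_{L^2(\hat K)}\le C\kappa^2|\epsilon(x_{\hat K},y_{\hat K})|\,\|f\|_{L^2(\hat K)}\quad\text{for all } f\in\mathcal{P}_1(\mathbb{R}^2),$$ where $\mathcal{P}_1(\mathbb{R}^2)$ is the space of real bivariate polynomials of total degree at most 1.
   Context: Notation: $\mathrm{i}=\sqrt{-1}$. Generalized plane waves (GPWs) on a domain $K$ with distinguished point (centroid) $(x_K,y_K)$: for $\kappa>0$, integer $q\ge1$, $\epsilon$ real, strictly positive and $\mathcal{C}^{q-1}$ on $K$, and direction $\theta$, the GPW is $\varphi=e^{P}$ with $P(x,y)=\sum_{0\le i+j\le q+1}\lambda_{i,j}(x-x_K)^i(y-y_K)^j$, where $\lambda_{0,0}=0$; $(\lambda_{1,0},\lambda_{0,1})=\mathrm{i}\kappa\sqrt{\epsilon(x_K,y_K)}(\cos\theta,\sin\theta)$; $\lambda_{i,j}=0$ for $i\in\{0,1\}$, $2\le i+j\le q+1$; and for $0\le i+j\le q-1$, $$\lambda_{i+2,j}=\frac{1}{(i+2)(i+1)}\Big(-\kappa^2\frac{\partial_x^i\partial_y^j\epsilon(x_K,y_K)}{i!\,j!}-(j+2)(j+1)\lambda_{i,j+2}-\sum_{k=0}^{i}\sum_{l=0}^{j}(i-k+1)(k+1)\lambda_{i-k+1,j-l}\lambda_{k+1,l}-\sum_{k=0}^{j}\sum_{l=0}^{i}(j-k+1)(k+1)\lambda_{i-l,j-k+1}\lambda_{l,k+1}\Big).$$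 $GPW_\kappa^{p,q}(K)$ is the (complex) span of the $p$ GPWs with directions $\theta_l=2\pi(l-1)/p$, $l=1,\dots,p$. *)

From Stdlib Require Import Reals Factorial.
From Coquelicot Require Import Coquelicot.

Local Open Scope R_scope.

Definition Cexp (z : C) : C :=
  (exp (fst z) * cos (snd z), exp (fst z) * sin (snd z)).

(* csum n f = f 0 + f 1 + ... + f n  (n+1 terms) *)
Fixpoint csum (n : nat) (f : nat -> C) : C :=
  match n with
  | O => f O
  | S m => Cplus (csum m f) (f (S m))
  end.

Definition pd (i j : nat) (e : R -> R -> R) (x y : R) : R :=
  Derive_n (fun x' => Derive_n (fun y' => e x' y') j y) i x.

(* e is C^infinity on the open square (a,b)^2: there is a family g i j of
   continuous functions with g 0 0 = e and d_x g i j = g (i+1) j,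
   d_y g i j = g i (j+1) there. *)
Definition in_open_sq (a b x y : R) : Prop := a < x < b /\ a < y < b.

Definition smooth_on_open_sq (a b : R) (e : R -> R -> R) : Prop :=
  exists g : nat -> nat -> R -> R -> R,
    (forall x y, in_open_sq a b x y -> g O O x y = e x y) /\
    (forall i j x y, in_open_sq a b x y ->
        is_derive (fun t => g i j t y) x (g (S i) j x y) /\
        is_derive (fun t => g i j x t) y (g i (S j) x y) /\
        continuous (fun p : R * R => g i j (fst p) (snd p)) (x, y)).

(* epsilon is smooth on the closed unit square K^ = [0,1]^2:
   smooth on an open neighbourhood (-d, 1+d)^2 of it. *)
Definition smooth_on_Khat (e : R -> R -> R) : Prop :=
  exists d : R, 0 < d /\ smooth_on_open_sq (- d) (1 + d) e.

Definition in_Khat (x y : R) : Prop := 0 <= x <= 1 /\ 0 <= y <= 1.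

Definition xK : R := 1 / 2.
Definition yK : R := 1 / 2.

Definition lam_base (kap : R) (e : R -> R -> R) (th : R) (i j : nat) : C :=
  match i, j with
  | 1%nat, 0%nat => (0, kap * sqrt (e xK yK) * cos th)
  | 0%nat, 1%nat => (0, kap * sqrt (e xK yK) * sin th)
  | _, _ => (0, 0)
  end.

Definition lam_step (kap : R) (e : R -> R -> R) (q : nat) (th : R)
  (prev : nat -> nat -> C) (i2 j : nat) : C :=
  match i2 with
  | O | 1%nat => lam_base kap e th i2 j
  | S (S i) =>
      if Nat.leb (i + j + 1) q then
        Cmult (RtoC (/ (INR (i + 2) * INR (i + 1))))
          (Cminus (Cminus (Cminus
             (RtoC (- kap ^ 2 * pd i j e xK yK / (INR (Factorial.fact i) * INR (Factorial.fact j))))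
             (Cmult (RtoC (INR (j + 2) * INR (j + 1))) (prev i (j + 2)%nat)))
             (csum i (fun k => csum j (fun l =>
                Cmult (RtoC (INR (i - k + 1) * INR (k + 1)))
                  (Cmult (prev (i - k + 1)%nat (j - l)%nat) (prev (k + 1)%nat l))))))
             (csum j (fun k => csum i (fun l =>
                Cmult (RtoC (INR (j - k + 1) * INR (k + 1)))
                  (Cmult (prev (i - l)%nat (j - k + 1)%nat) (prev l (k + 1)%nat))))))
      else (0, 0)
  end.

(* lambda_{i,j}: iterating the step q+2 times fixes all entries with i+j <= q+1
   (the entries with first index <= m+1 are final after m steps). *)
Definition lam (kap : R) (e : R -> R -> R) (q : nat) (th : R) : nat -> nat -> C :=
  Nat.iter (q + 2) (lam_step kap e q th) (lam_base kap e th).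

Definition gpw_P (kap : R) (e : R -> R -> R) (q : nat) (th x y : R) : C :=
  csum (q + 1) (fun i => csum (q + 1 - i) (fun j =>
    Cmult (lam kap e q th i j) (RtoC ((x - xK) ^ i * (y - yK) ^ j)))).

Definition gpw (kap : R) (e : R -> R -> R) (q : nat) (th x y : R) : C :=
  Cexp (gpw_P kap e q th x y).

(* element of GPW_kappa^{p,q}(K^) with complex coefficients c_0..c_{p-1};
   direction theta_l = 2 pi (l-1)/p, l = 1..p, indexed here by l-1 = 0..p-1 *)
Definition gpw_comb (kap : R) (e : R -> R -> R) (p q : nat) (c : nat -> C)
  (x y : R) : C :=
  csum (p - 1) (fun l =>
    Cmult (c l) (gpw kap e q (2 * PI * INR l / INR p) x y)).

Definition L2Khat (g : R -> R -> C) : R :=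
  sqrt (RInt (fun x => RInt (fun y => (Cmod (g x y)) ^ 2) 0 1) 0 1).

Definition best_approx_err (kap : R) (e : R -> R -> R) (p q : nat)
  (f : R -> R -> R) : Rbar :=
  Glb_Rbar (fun r => exists c : nat -> C,
    r = L2Khat (fun x y => Cminus (RtoC (f x y)) (gpw_comb kap e p q c x y))).

(* For small [kap] the coefficients [lam i j] with [i + j >= 2] are [O(kap^2)] and depend on
   the direction only at order [kap^3]: the [kap^2]-part of [lam 2 0] cancels by the Helmholtz
   equation, and every later product contains a coefficient of order [i + j >= 2]. Hence, on [K^],
   [phi_theta = 1 + s - t^2/2 + i (t + r) + O(kap^3)] with [t = kap sqrt(eps0) (cos theta X +
   sin theta Y)] and [s + i r] independent of [theta] up to [O(kap^3)]. For [p >= 4] equispaced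
   directions the discrete moments of order 1 and 3 of [(cos theta_l, sin theta_l)] vanish, so the
   combination with coefficients [u/p - i (2 / (p kap sqrt eps0)) (b cos theta_l + c sin theta_l)]
   equals [u + b X + c Y] up to [O(kap^2) (|u| + |b| + |c|)], and [|u| + |b| + |c|] is bounded by
   the [L^2] norm of the affine function. For large [kap] the zero combination suffices. *)

From Stdlib Require Import Reals Lra Lia FunctionalExtensionality.
From Coquelicot Require Import Coquelicot.

Local Open Scope R_scope.

(** * Complex moduli and finite sums *)

Lemma Rabs_fst_le_Cmod (z : C) : Rabs (fst z) <= Cmod z.
Proof. eapply Rle_trans; [apply Rmax_l | apply Rmax_Cmod]. Qed.

Lemma Rabs_snd_le_Cmod (z : C) : Rabs (snd z) <= Cmod z.
Proof. eapply Rle_trans; [apply Rmax_r | apply Rmax_Cmod]. Qed.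

Lemma Cmod_le_Rabs_fst_snd (z : C) : Cmod z <= Rabs (fst z) + Rabs (snd z).
Proof.
  destruct z as [a b]; unfold Cmod; cbn [fst snd].
  pose proof (Rabs_pos a); pose proof (Rabs_pos b).
  rewrite <- (sqrt_pow2 (Rabs a + Rabs b)) by lra.
  apply sqrt_le_1_alt. rewrite <- (pow2_abs a), <- (pow2_abs b). simpl. nra.
Qed.

Lemma Cmod_pure_imag (b : R) : Cmod (0, b) = Rabs b.
Proof. unfold Cmod; simpl. rewrite <- sqrt_Rsqr_abs. f_equal. unfold Rsqr. ring. Qed.

Lemma Cmod_scale_le (c : R) (z : C) : 0 <= c <= 1 -> Cmod (Cmult (RtoC c) z) <= Cmod z.
Proof.
  intros Hc. rewrite Cmod_mult, Cmod_R, Rabs_pos_eq by lra.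
  pose proof (Cmod_ge_0 z). nra.
Qed.

Lemma Cmod_sub3_le (a b c d : C) :
  Cmod (Cminus (Cminus (Cminus a b) c) d) <= Cmod a + Cmod b + Cmod c + Cmod d.
Proof.
  unfold Cminus. rewrite <- (Cmod_opp b), <- (Cmod_opp c), <- (Cmod_opp d).
  pose proof (Cmod_triangle (a + - b + - c)%C (- d)%C).
  pose proof (Cmod_triangle (a + - b)%C (- c)%C).
  pose proof (Cmod_triangle a (- b)%C). lra.
Qed.

Lemma csum_ext (n : nat) (f g : nat -> C) :
  (forall k, (k <= n)%nat -> f k = g k) -> csum n f = csum n g.
Proof.
  induction n as [|n IH]; intros H; simpl.
  - apply H; lia.
  - rewrite IH by (intros; apply H; lia). rewrite H by lia. reflexivity.
Qed.

Lemma csum_plus (n : nat) (f g : nat -> C) :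
  csum n (fun k => Cplus (f k) (g k)) = Cplus (csum n f) (csum n g).
Proof. induction n as [|n IH]; simpl; [|rewrite IH; ring]. reflexivity. Qed.

Lemma csum_minus (n : nat) (f g : nat -> C) :
  csum n (fun k => Cminus (f k) (g k)) = Cminus (csum n f) (csum n g).
Proof. induction n as [|n IH]; simpl; [|rewrite IH; ring]. reflexivity. Qed.

Lemma csum_eq0 (n : nat) (f : nat -> C) :
  (forall k, (k <= n)%nat -> f k = RtoC 0) -> csum n f = RtoC 0.
Proof.
  induction n as [|n IH]; intros H; simpl; [apply H; lia|].
  rewrite IH by (intros; apply H; lia). rewrite H by lia. ring.
Qed.

Lemma csum_first_two (n : nat) (f : nat -> C) : (1 <= n)%nat ->
  (forall k, (2 <= k <= n)%nat -> f k = RtoC 0) -> csum n f = Cplus (f 0%nat) (f 1%nat).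
Proof.
  induction n as [|[|n] IH]; intros Hn H; [lia|reflexivity|].
  change (csum (S (S n)) f) with (Cplus (csum (S n) f) (f (S (S n)))).
  rewrite IH, (H (S (S n))) by (lia || (intros; apply H; lia)). ring.
Qed.

Lemma csum_fst (n : nat) (f : nat -> C) : fst (csum n f) = sum_f_R0 (fun k => fst (f k)) n.
Proof. induction n as [|n IH]; simpl; [|rewrite IH]; reflexivity. Qed.

Lemma csum_snd (n : nat) (f : nat -> C) : snd (csum n f) = sum_f_R0 (fun k => snd (f k)) n.
Proof. induction n as [|n IH]; simpl; [|rewrite IH]; reflexivity. Qed.

Lemma csum_Cmod_le (n : nat) (f : nat -> C) (B : R) :
  (forall k, (k <= n)%nat -> Cmod (f k) <= B) -> Cmod (csum n f) <= INR (S n) * B.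
Proof.
  induction n as [|n IH]; intros H; simpl csum.
  - specialize (H 0%nat (le_n _)). simpl. lra.
  - eapply Rle_trans; [apply Cmod_triangle|].
    assert (Cmod (csum n f) <= INR (S n) * B) by (apply IH; intros; apply H; lia).
    specialize (H (S n) (le_n _)). rewrite (S_INR (S n)). lra.
Qed.

Lemma csum2_Cmod_le (i j N : nat) (F : nat -> nat -> C) (B : R) :
  (i <= N)%nat -> (j <= N)%nat -> 0 <= B ->
  (forall k l, (k <= i)%nat -> (l <= j)%nat -> Cmod (F k l) <= B) ->
  Cmod (csum i (fun k => csum j (F k))) <= (INR N + 1) ^ 2 * B.
Proof.
  intros Hi Hj HB H.
  eapply Rle_trans.
  { apply csum_Cmod_le with (B := INR (S j) * B). intros k Hk. apply csum_Cmod_le; auto. }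
  rewrite !S_INR. pose proof (le_INR _ _ Hi). pose proof (le_INR _ _ Hj).
  pose proof (pos_INR i). pose proof (pos_INR j).
  assert ((INR i + 1) * (INR j + 1) <= (INR N + 1) ^ 2) by (simpl; nra). nra.
Qed.

Lemma INR_plus_2 (N : nat) : INR (N + 2) = INR N + 2.
Proof. rewrite plus_INR. simpl. ring. Qed.

Lemma csum_triangle_Cmod_le (N : nat) (F : nat -> nat -> C) (B : R) : 0 <= B ->
  (forall i j, Cmod (F i j) <= B) ->
  Cmod (csum (N + 1) (fun i => csum (N + 1 - i) (F i))) <= (INR N + 2) ^ 2 * B.
Proof.
  intros HB H. eapply Rle_trans.
  { apply csum_Cmod_le with (B := (INR N + 2) * B). intros k Hk.
    eapply Rle_trans; [apply csum_Cmod_le; intros; apply H|].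
    apply Rmult_le_compat_r; auto.
    rewrite <- INR_plus_2. apply le_INR. lia. }
  replace (S (N + 1)) with (N + 2)%nat by lia. rewrite INR_plus_2. right; ring.
Qed.

(** * Size of the GPW coefficients *)

Definition lam_iter (kap : R) (e : R -> R -> R) (q : nat) (th : R) (m : nat) : nat -> nat -> C :=
  Nat.iter m (lam_step kap e q th) (lam_base kap e th).

Lemma lam_iter_low kap e q th m i j :
  (i <= 1)%nat -> lam_iter kap e q th m i j = lam_base kap e th i j.
Proof.
  intros Hi. destruct m as [|m]; [reflexivity|].
  unfold lam_iter. cbn [Nat.iter]. unfold lam_step at 1.
  destruct i as [|[|i]]; [reflexivity|reflexivity|lia].
Qed.

Lemma lam_base_high kap e th i j : (2 <= i + j)%nat -> lam_base kap e th i j = RtoC 0.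
Proof. intros H. destruct i as [|[|i]], j as [|[|j]]; simpl; try reflexivity; lia. Qed.

Lemma lam_base_Cmod_le kap e th i j :
  0 <= kap -> Cmod (lam_base kap e th i j) <= sqrt (e xK yK) * kap.
Proof.
  intros Hk. pose proof (sqrt_pos (e xK yK)).
  assert (Htrig : forall t, -1 <= t <= 1 -> Rabs (kap * sqrt (e xK yK) * t) <= sqrt (e xK yK) * kap).
  { intros t Ht. apply Rabs_le in Ht.
    pose proof (Rabs_pos t). rewrite !Rabs_mult, (Rabs_pos_eq kap), (Rabs_pos_eq (sqrt _)) by lra.
    assert (0 <= kap * sqrt (e xK yK)) by nra. nra. }
  destruct i as [|[|i]], j as [|[|j]]; simpl lam_base; rewrite Cmod_pure_imag;
    try (rewrite Rabs_R0; nra); apply Htrig; apply SIN_bound || apply COS_bound.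
Qed.

Definition lam_rhs (kap : R) (e : R -> R -> R) (i j : nat) (P : nat -> nat -> C) : C :=
  Cmult (RtoC (/ (INR (i + 2) * INR (i + 1))))
   (Cminus (Cminus (Cminus
      (RtoC (- kap ^ 2 * pd i j e xK yK / (INR (Factorial.fact i) * INR (Factorial.fact j))))
      (Cmult (RtoC (INR (j + 2) * INR (j + 1))) (P i (j + 2)%nat)))
      (csum i (fun k => csum j (fun l =>
         Cmult (RtoC (INR (i - k + 1) * INR (k + 1)))
           (Cmult (P (i - k + 1)%nat (j - l)%nat) (P (k + 1)%nat l))))))
      (csum j (fun k => csum i (fun l =>
         Cmult (RtoC (INR (j - k + 1) * INR (k + 1)))
           (Cmult (P (i - l)%nat (j - k + 1)%nat) (P l (k + 1)%nat)))))).

Lemma lam_step_SS kap e q th P i j :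
  lam_step kap e q th P (S (S i)) j =
  if Nat.leb (i + j + 1) q then lam_rhs kap e i j P else RtoC 0.
Proof. reflexivity. Qed.

(* At order 0 the recursion reads [2 lam_20 = - kap^2 eps - lam_10^2 - lam_01^2], which vanishes
   because [lam_10^2 + lam_01^2 = - kap^2 eps]. *)
Lemma lam_step_2_0 kap e q th (P : nat -> nat -> C) :
  0 < e xK yK -> (1 <= q)%nat ->
  (forall i j, (i <= 1)%nat -> P i j = lam_base kap e th i j) ->
  lam_step kap e q th P 2 0 = RtoC 0.
Proof.
  intros He Hq HP. rewrite lam_step_SS.
  replace (Nat.leb (0 + 0 + 1) q) with true by (symmetry; apply Nat.leb_le; lia).
  unfold lam_rhs. simpl csum. rewrite !HP by lia.
  unfold pd. simpl Derive_n. simpl lam_base. simpl Factorial.fact. simpl INR.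
  unfold Cmult, Cminus, Cplus, Copp, RtoC; simpl.
  pose proof (sqrt_sqrt (e xK yK) ltac:(lra)). pose proof (sin2_cos2 th). unfold Rsqr in *.
  f_equal; field_simplify; try nra.
  match goal with |- ?a / 2 = 0 => replace a with 0 end; [field|].
  replace (sqrt (e xK yK) ^ 2) with (e xK yK) by (simpl; lra).
  replace (cos th ^ 2) with (1 - sin th ^ 2) by (simpl; lra). ring.
Qed.

Definition entry_estimates (M kap : R) (i j : nat) (z z' : C) : Prop :=
  Cmod z <= M * kap /\ Cmod z' <= M * kap /\
  ((2 <= i + j)%nat ->
     Cmod z <= M * kap ^ 2 /\ Cmod z' <= M * kap ^ 2 /\ Cmod (Cminus z z') <= M * kap ^ 3).

(* [P] and [P'] are the coefficient tables of two directions. *)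
Definition coeff_estimates (M kap : R) (P P' : nat -> nat -> C) : Prop :=
  forall i j, entry_estimates M kap i j (P i j) (P' i j).

Lemma entry_estimates_of_high (M kap : R) (i j : nat) (z z' : C) :
  0 <= M -> 0 <= kap <= 1 ->
  Cmod z <= M * kap ^ 2 -> Cmod z' <= M * kap ^ 2 -> Cmod (Cminus z z') <= M * kap ^ 3 ->
  entry_estimates M kap i j z z'.
Proof.
  intros HM Hk Hz Hz' Hd.
  assert (M * kap ^ 2 <= M * kap) by (apply Rmult_le_compat_l; simpl; nra).
  repeat split; auto; lra.
Qed.

Lemma entry_estimates_zero (M kap : R) (i j : nat) :
  0 <= M -> 0 <= kap <= 1 -> entry_estimates M kap i j (RtoC 0) (RtoC 0).
Proof.
  intros HM Hk.
  assert (0 <= M * kap ^ 2) by (apply Rmult_le_pos; [lra|apply pow_le; lra]).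
  assert (0 <= M * kap ^ 3) by (apply Rmult_le_pos; [lra|apply pow_le; lra]).
  apply entry_estimates_of_high; auto; replace (Cminus (RtoC 0) (RtoC 0)) with (RtoC 0) by ring;
    rewrite Cmod_0; lra.
Qed.

Lemma entry_estimates_base (M kap : R) e th th' i j :
  sqrt (e xK yK) <= M -> 0 <= kap <= 1 ->
  entry_estimates M kap i j (lam_base kap e th i j) (lam_base kap e th' i j).
Proof.
  intros HM Hk. pose proof (sqrt_pos (e xK yK)).
  destruct (Compare_dec.le_lt_dec 2 (i + j)) as [Hij|Hij].
  - rewrite !lam_base_high by exact Hij. apply entry_estimates_zero; lra.
  - assert (Hb : forall t, Cmod (lam_base kap e t i j) <= M * kap).
    { intros t. eapply Rle_trans; [apply lam_base_Cmod_le; lra|].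
      apply Rmult_le_compat_r; lra. }
    repeat split; auto; lia.
Qed.

Lemma entry_estimates_mul (M kap : R) i j i' j' (A A' B B' : C) :
  0 <= M -> 0 < kap <= 1 ->
  entry_estimates M kap i j A A' -> entry_estimates M kap i' j' B B' ->
  (2 <= i + j \/ 2 <= i' + j')%nat ->
  Cmod (Cminus (Cmult A B) (Cmult A' B')) <= 3 * M ^ 2 * kap ^ 3.
Proof.
  intros HM Hk [HA [HA' HAh]] [HB [HB' HBh]] Hhigh.
  replace (Cminus (Cmult A B) (Cmult A' B'))
    with (Cplus (Cmult (Cminus A A') B) (Cmult A' (Cminus B B'))) by ring.
  eapply Rle_trans; [apply Cmod_triangle|]. rewrite !Cmod_mult.
  assert (DA : Cmod (Cminus A A') <= 2 * M * kap).
  { unfold Cminus. eapply Rle_trans; [apply Cmod_triangle|]. rewrite Cmod_opp. lra. }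
  assert (DB : Cmod (Cminus B B') <= 2 * M * kap).
  { unfold Cminus. eapply Rle_trans; [apply Cmod_triangle|]. rewrite Cmod_opp. lra. }
  pose proof (Cmod_ge_0 (Cminus A A')). pose proof (Cmod_ge_0 (Cminus B B')).
  pose proof (Cmod_ge_0 A'). pose proof (Cmod_ge_0 B).
  assert (k4 : M ^ 2 * kap ^ 4 <= M ^ 2 * kap ^ 3)
    by (apply Rmult_le_compat_l; [nra|simpl; nra]).
  destruct Hhigh as [Hh|Hh]; [destruct (HAh Hh) as [_ [G2 G3]]|destruct (HBh Hh) as [G1 [_ G3]]].
  - assert (Cmod (Cminus A A') * Cmod B <= M * kap ^ 3 * (M * kap))
      by (apply Rmult_le_compat; auto).
    assert (Cmod A' * Cmod (Cminus B B') <= M * kap ^ 2 * (2 * M * kap))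
      by (apply Rmult_le_compat; auto).
    nra.
  - assert (Cmod (Cminus A A') * Cmod B <= 2 * M * kap * (M * kap ^ 2))
      by (apply Rmult_le_compat; auto).
    assert (Cmod A' * Cmod (Cminus B B') <= M * kap * (M * kap ^ 3))
      by (apply Rmult_le_compat; auto).
    nra.
Qed.

Lemma lam_rhs_denom_bounds (i : nat) : 0 <= / (INR (i + 2) * INR (i + 1)) <= 1.
Proof.
  rewrite !plus_INR. simpl. pose proof (pos_INR i).
  split; [apply Rlt_le, Rinv_0_lt_compat; nra|].
  rewrite <- Rinv_1. apply Rinv_le_contravar; nra.
Qed.

Lemma INR_mul_le_sq (a b N c : nat) : (a <= N + c)%nat -> (b <= N + c)%nat ->
  0 <= INR a * INR b <= (INR N + INR c) ^ 2.
Proof.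
  intros Ha Hb. apply le_INR in Ha, Hb. rewrite plus_INR in Ha, Hb.
  pose proof (pos_INR a). pose proof (pos_INR b). split; simpl; nra.
Qed.

Lemma csum2_minus (i j : nat) (F G : nat -> nat -> C) :
  Cminus (csum i (fun k => csum j (fun l => F k l))) (csum i (fun k => csum j (fun l => G k l)))
  = csum i (fun k => csum j (fun l => Cminus (F k l) (G k l))).
Proof. rewrite <- csum_minus. apply csum_ext. intros k _. symmetry. apply csum_minus. Qed.

Lemma conv_sum_Cmod_le (n m q : nat) (coef : nat -> nat -> R) (A B : nat -> nat -> C) (X : R) :
  (n <= q)%nat -> (m <= q)%nat -> 0 <= X ->
  (forall k l, (k <= n)%nat -> (l <= m)%nat -> 0 <= coef k l <= (INR q + 1) ^ 2) ->
  (forall k l, Cmod (A k l) <= X) -> (forall k l, Cmod (B k l) <= X) ->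
  Cmod (csum n (fun k => csum m (fun l => Cmult (RtoC (coef k l)) (Cmult (A k l) (B k l)))))
    <= (INR q + 1) ^ 4 * X ^ 2.
Proof.
  intros Hn Hm HX Hc HA HB.
  replace ((INR q + 1) ^ 4 * X ^ 2) with ((INR q + 1) ^ 2 * ((INR q + 1) ^ 2 * X ^ 2)) by ring.
  apply csum2_Cmod_le; auto; [apply Rmult_le_pos; apply pow2_ge_0|].
  intros k l Hk Hl. specialize (Hc k l Hk Hl).
  rewrite !Cmod_mult, Cmod_R, Rabs_pos_eq by lra.
  pose proof (Cmod_ge_0 (A k l)). pose proof (Cmod_ge_0 (B k l)).
  assert (Cmod (A k l) * Cmod (B k l) <= X * X) by (apply Rmult_le_compat; auto).
  assert (0 <= Cmod (A k l) * Cmod (B k l)) by nra. simpl. nra.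
Qed.

Lemma conv_sum_sub_Cmod_le (n m q : nat) (coef : nat -> nat -> R) (A B A' B' : nat -> nat -> C)
    (Y : R) :
  (n <= q)%nat -> (m <= q)%nat -> 0 <= Y ->
  (forall k l, (k <= n)%nat -> (l <= m)%nat -> 0 <= coef k l <= (INR q + 1) ^ 2) ->
  (forall k l, (k <= n)%nat -> (l <= m)%nat ->
     Cmod (Cminus (Cmult (A k l) (B k l)) (Cmult (A' k l) (B' k l))) <= Y) ->
  Cmod (Cminus
    (csum n (fun k => csum m (fun l => Cmult (RtoC (coef k l)) (Cmult (A k l) (B k l)))))
    (csum n (fun k => csum m (fun l => Cmult (RtoC (coef k l)) (Cmult (A' k l) (B' k l))))))
    <= (INR q + 1) ^ 4 * Y.
Proof.
  intros Hn Hm HY Hc HD. rewrite csum2_minus.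
  replace ((INR q + 1) ^ 4 * Y) with ((INR q + 1) ^ 2 * ((INR q + 1) ^ 2 * Y)) by ring.
  apply csum2_Cmod_le; auto; [apply Rmult_le_pos; [apply pow2_ge_0|lra]|].
  intros k l Hk Hl. specialize (Hc k l Hk Hl).
  replace (Cminus _ _)
    with (Cmult (RtoC (coef k l)) (Cminus (Cmult (A k l) (B k l)) (Cmult (A' k l) (B' k l))))
    by ring.
  rewrite Cmod_mult, Cmod_R, Rabs_pos_eq by lra.
  specialize (HD k l Hk Hl). pose proof (Cmod_ge_0 (Cminus (Cmult (A k l) (B k l)) (Cmult (A' k l) (B' k l)))).
  nra.
Qed.

Lemma taylor_term_Cmod_le (kap D d : R) :
  Rabs d <= D -> Cmod (RtoC (- kap ^ 2 * d)) <= D * kap ^ 2.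
Proof.
  intros H. rewrite Cmod_R, Rabs_mult, Rabs_Ropp, Rabs_pos_eq by apply pow2_ge_0.
  pose proof (pow2_ge_0 kap). nra.
Qed.

Lemma lam_rhs_Cmod_le kap e q i j (P : nat -> nat -> C) M D :
  0 <= M -> 0 < kap <= 1 -> (i + j + 1 <= q)%nat ->
  Rabs (pd i j e xK yK / (INR (Factorial.fact i) * INR (Factorial.fact j))) <= D ->
  (forall a b, Cmod (P a b) <= M * kap) ->
  (forall a b, (2 <= a + b)%nat -> Cmod (P a b) <= M * kap ^ 2) ->
  Cmod (lam_rhs kap e i j P)
    <= (D + (INR q + 2) ^ 2 * M + 2 * ((INR q + 1) ^ 4 * M ^ 2)) * kap ^ 2.
Proof.
  intros HM Hk Hij HD H1 H2. unfold lam_rhs.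
  eapply Rle_trans; [apply Cmod_scale_le, lam_rhs_denom_bounds|].
  eapply Rle_trans; [apply Cmod_sub3_le|].
  replace ((D + (INR q + 2) ^ 2 * M + 2 * ((INR q + 1) ^ 4 * M ^ 2)) * kap ^ 2) with
    (D * kap ^ 2 + (INR q + 2) ^ 2 * (M * kap ^ 2)
     + (INR q + 1) ^ 4 * (M * kap) ^ 2 + (INR q + 1) ^ 4 * (M * kap) ^ 2) by ring.
  assert (HMk : 0 <= M * kap) by nra.
  repeat apply Rplus_le_compat.
  - unfold Rdiv. rewrite Rmult_assoc. apply taylor_term_Cmod_le. exact HD.
  - rewrite Cmod_mult, Cmod_R.
    destruct (INR_mul_le_sq (j + 2) (j + 1) q 2 ltac:(lia) ltac:(lia)) as [C0 C1].
    rewrite Rabs_pos_eq by lra.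
    apply Rmult_le_compat; [lra|apply Cmod_ge_0|exact C1|apply H2; lia].
  - apply conv_sum_Cmod_le; auto; try lia.
    intros k l Hk' Hl'. apply (INR_mul_le_sq _ _ q 1); lia.
  - apply conv_sum_Cmod_le; auto; try lia.
    intros k l Hk' Hl'. apply (INR_mul_le_sq _ _ q 1); lia.
Qed.

Lemma Cmod_scaled_sub3_sub_le (c : R) (a b s t b' s' t' : C) : 0 <= c <= 1 ->
  Cmod (Cminus (Cmult (RtoC c) (Cminus (Cminus (Cminus a b) s) t))
               (Cmult (RtoC c) (Cminus (Cminus (Cminus a b') s') t')))
    <= Cmod (Cminus b b') + Cmod (Cminus s s') + Cmod (Cminus t t').
Proof.
  intros Hc.
  replace (Cminus _ _)
    with (Cmult (RtoC c) (Copp (Cplus (Cplus (Cminus b b') (Cminus s s')) (Cminus t t'))))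
    by ring.
  eapply Rle_trans; [apply Cmod_scale_le; exact Hc|]. rewrite Cmod_opp.
  pose proof (Cmod_triangle (Cplus (Cminus b b') (Cminus s s')) (Cminus t t')).
  pose proof (Cmod_triangle (Cminus b b') (Cminus s s')). lra.
Qed.

Lemma lam_rhs_sub_Cmod_le kap e q i j (P P' : nat -> nat -> C) M :
  0 <= M -> 0 < kap <= 1 -> (i + j + 1 <= q)%nat -> (i <> 0 \/ j <> 0)%nat ->
  coeff_estimates M kap P P' ->
  Cmod (Cminus (lam_rhs kap e i j P) (lam_rhs kap e i j P'))
    <= ((INR q + 2) ^ 2 * M + 6 * ((INR q + 1) ^ 4 * M ^ 2)) * kap ^ 3.
Proof.
  intros HM Hk Hij Hnz HI. unfold lam_rhs.
  eapply Rle_trans; [apply Cmod_scaled_sub3_sub_le, lam_rhs_denom_bounds|].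
  replace (((INR q + 2) ^ 2 * M + 6 * ((INR q + 1) ^ 4 * M ^ 2)) * kap ^ 3) with
    ((INR q + 2) ^ 2 * (M * kap ^ 3)
     + (INR q + 1) ^ 4 * (3 * M ^ 2 * kap ^ 3) + (INR q + 1) ^ 4 * (3 * M ^ 2 * kap ^ 3))
    by ring.
  assert (HY : 0 <= 3 * M ^ 2 * kap ^ 3)
    by (apply Rmult_le_pos; [nra|apply pow_le; lra]).
  repeat apply Rplus_le_compat.
  - replace (Cminus _ _) with (Cmult (RtoC (INR (j + 2) * INR (j + 1)))
                                  (Cminus (P i (j + 2)%nat) (P' i (j + 2)%nat))) by ring.
    rewrite Cmod_mult, Cmod_R.
    destruct (INR_mul_le_sq (j + 2) (j + 1) q 2 ltac:(lia) ltac:(lia)) as [C0 C1].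
    rewrite Rabs_pos_eq by lra.
    apply Rmult_le_compat; [lra|apply Cmod_ge_0|exact C1|].
    apply (HI i (j + 2)%nat). lia.
  - apply conv_sum_sub_Cmod_le; auto; try lia.
    + intros k l Hk' Hl'. apply (INR_mul_le_sq _ _ q 1); lia.
    + intros k l Hk' Hl'. apply (entry_estimates_mul M kap (i - k + 1) (j - l) (k + 1) l);
        auto; lia.
  - apply conv_sum_sub_Cmod_le; auto; try lia.
    + intros k l Hk' Hl'. apply (INR_mul_le_sq _ _ q 1); lia.
    + intros k l Hk' Hl'. apply (entry_estimates_mul M kap (i - l) (j - k + 1) l (k + 1));
        auto; lia.
Qed.

Lemma lam_step_estimates kap e q th th' (P P' : nat -> nat -> C) M D :
  0 < e xK yK -> (1 <= q)%nat -> 0 <= M -> 0 <= D -> 0 < kap <= 1 ->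
  (forall i j, (i <= q)%nat -> (j <= q)%nat ->
     Rabs (pd i j e xK yK / (INR (Factorial.fact i) * INR (Factorial.fact j))) <= D) ->
  (forall i j, (i <= 1)%nat -> P i j = lam_base kap e th i j) ->
  (forall i j, (i <= 1)%nat -> P' i j = lam_base kap e th' i j) ->
  coeff_estimates M kap P P' ->
  coeff_estimates (D + sqrt (e xK yK) + (INR q + 2) ^ 2 * M + 6 * (INR q + 1) ^ 4 * M ^ 2) kap
    (lam_step kap e q th P) (lam_step kap e q th' P').
Proof.
  intros He Hq HM HD Hk HDb HP HP' HI.
  set (M' := D + sqrt (e xK yK) + (INR q + 2) ^ 2 * M + 6 * (INR q + 1) ^ 4 * M ^ 2).
  assert (Hq2 : 0 <= (INR q + 2) ^ 2 * M) by (apply Rmult_le_pos; [apply pow2_ge_0|lra]).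
  assert (Hq4 : 0 <= (INR q + 1) ^ 4 * M ^ 2) by (apply Rmult_le_pos; apply pow_le; pose proof (pos_INR q); lra).
  pose proof (sqrt_pos (e xK yK)).
  assert (Hkap : 0 <= kap <= 1) by lra.
  assert (HM' : 0 <= M') by (unfold M'; lra).
  intros [|[|i]] j.
  - exact (entry_estimates_base M' kap e th th' 0 j ltac:(unfold M'; lra) Hkap).
  - exact (entry_estimates_base M' kap e th th' 1 j ltac:(unfold M'; lra) Hkap).
  - destruct (Compare_dec.le_lt_dec 1 (i + j)) as [Hnz|Hz].
    2: { replace i with 0%nat by lia. replace j with 0%nat by lia.
         rewrite (lam_step_2_0 kap e q th P), (lam_step_2_0 kap e q th' P') by auto.
         apply entry_estimates_zero; auto. }
    rewrite !lam_step_SS. destruct (Nat.leb (i + j + 1) q) eqn:Hl;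
      [apply Nat.leb_le in Hl|apply entry_estimates_zero; auto].
    assert (Hrhs : forall Q : nat -> nat -> C,
              (forall a b, Cmod (Q a b) <= M * kap) ->
              (forall a b, (2 <= a + b)%nat -> Cmod (Q a b) <= M * kap ^ 2) ->
              Cmod (lam_rhs kap e i j Q) <= M' * kap ^ 2).
    { intros Q HQ1 HQ2. eapply Rle_trans.
      - apply (lam_rhs_Cmod_le kap e q i j Q M D); auto. apply HDb; lia.
      - apply Rmult_le_compat_r; [apply pow2_ge_0|unfold M'; lra]. }
    apply entry_estimates_of_high; auto; [apply Hrhs; intros; apply HI; auto..|].
    eapply Rle_trans; [apply (lam_rhs_sub_Cmod_le kap e q i j P P' M); auto; lia|].
    apply Rmult_le_compat_r; [apply pow_le; lra|unfold M'; lra].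
Qed.

Lemma finite_bound_1d (N : nat) (h : nat -> R) :
  exists B, 0 <= B /\ forall i, (i <= N)%nat -> Rabs (h i) <= B.
Proof.
  induction N as [|N [B [HB0 HB]]].
  - exists (Rabs (h 0%nat)). split; [apply Rabs_pos|]. intros i Hi.
    replace i with 0%nat by lia. lra.
  - exists (Rmax B (Rabs (h (S N)))). split; [eapply Rle_trans; [apply HB0|apply Rmax_l]|].
    intros i Hi. destruct (Nat.eq_dec i (S N)) as [->|Hne]; [apply Rmax_r|].
    eapply Rle_trans; [apply HB; lia|apply Rmax_l].
Qed.

Lemma finite_bound_2d (N : nat) (h : nat -> nat -> R) :
  exists B, 0 <= B /\ forall i j, (i <= N)%nat -> (j <= N)%nat -> Rabs (h i j) <= B.
Proof.
  induction N as [|N [B [HB0 HB]]].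
  - exists (Rabs (h 0%nat 0%nat)). split; [apply Rabs_pos|]. intros i j Hi Hj.
    replace i with 0%nat by lia. replace j with 0%nat by lia. lra.
  - destruct (finite_bound_1d (S N) (fun i => h i (S N))) as [B1 [HB1 H1]].
    destruct (finite_bound_1d (S N) (fun j => h (S N) j)) as [B2 [HB2 H2]].
    exists (B + B1 + B2). split; [lra|]. intros i j Hi Hj.
    destruct (Nat.eq_dec j (S N)) as [->|Hj']; [specialize (H1 i Hi); simpl in H1; lra|].
    destruct (Nat.eq_dec i (S N)) as [->|Hi']; [specialize (H2 j Hj); simpl in H2; lra|].
    specialize (HB i j ltac:(lia) ltac:(lia)). lra.
Qed.

Lemma lam_iter_estimates (e : R -> R -> R) (q : nat) : 0 < e xK yK -> (1 <= q)%nat ->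
  forall m, exists M, 0 <= M /\ forall kap th th', 0 < kap <= 1 ->
    coeff_estimates M kap (lam_iter kap e q th m) (lam_iter kap e q th' m).
Proof.
  intros He Hq.
  destruct (finite_bound_2d q
              (fun i j => pd i j e xK yK / (INR (Factorial.fact i) * INR (Factorial.fact j))))
    as [D [HD0 HD]].
  induction m as [|m [M [HM IH]]].
  - exists (sqrt (e xK yK)). split; [apply sqrt_pos|].
    intros kap th th' Hk i j. apply entry_estimates_base; lra.
  - exists (D + sqrt (e xK yK) + (INR q + 2) ^ 2 * M + 6 * (INR q + 1) ^ 4 * M ^ 2). split.
    + pose proof (sqrt_pos (e xK yK)). pose proof (pos_INR q).
      assert (0 <= (INR q + 2) ^ 2 * M) by (apply Rmult_le_pos; [apply pow2_ge_0|lra]).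
      assert (0 <= (INR q + 1) ^ 4 * M ^ 2) by (apply Rmult_le_pos; apply pow_le; lra).
      lra.
    + intros kap th th' Hk.
      change (lam_iter kap e q ?t (S m)) with (lam_step kap e q t (lam_iter kap e q t m)).
      apply lam_step_estimates; auto; intros; apply lam_iter_low; auto.
Qed.

Definition lam_high (kap : R) (e : R -> R -> R) (q : nat) (th : R) (i j : nat) : C :=
  Cminus (lam kap e q th i j) (lam_base kap e th i j).

Lemma lam_high_estimates (e : R -> R -> R) (q : nat) : 0 < e xK yK -> (1 <= q)%nat ->
  exists M, 0 <= M /\ forall kap th th', 0 < kap <= 1 -> forall i j,
    Cmod (lam_high kap e q th i j) <= M * kap ^ 2 /\
    Cmod (Cminus (lam_high kap e q th i j) (lam_high kap e q th' i j)) <= M * kap ^ 3.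
Proof.
  intros He Hq. destruct (lam_iter_estimates e q He Hq (q + 2)) as [M [HM HI]].
  exists M. split; auto. intros kap th th' Hk i j.
  assert (Hlam : forall t, lam kap e q t = lam_iter kap e q t (q + 2)) by reflexivity.
  unfold lam_high. rewrite !Hlam.
  destruct (Nat.le_gt_cases i 1) as [Hi|Hi].
  - rewrite !lam_iter_low by exact Hi.
    replace (Cminus (lam_base kap e th i j) (lam_base kap e th i j)) with (RtoC 0) by ring.
    replace (Cminus (lam_base kap e th' i j) (lam_base kap e th' i j)) with (RtoC 0) by ring.
    replace (Cminus (RtoC 0) (RtoC 0)) with (RtoC 0) by ring.
    rewrite Cmod_0. split; apply Rmult_le_pos; auto; apply pow_le; lra.
  - rewrite !lam_base_high by lia.
    replace (Cminus (lam_iter kap e q th (q + 2) i j) (RtoC 0)) with (lam_iter kap e q th (q + 2) i j) by ring.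
    replace (Cminus (lam_iter kap e q th' (q + 2) i j) (RtoC 0)) with (lam_iter kap e q th' (q + 2) i j) by ring.
    destruct (HI kap th th' Hk i j) as [_ [_ Hh]]. destruct (Hh ltac:(lia)) as [H1 [_ H3]]. auto.
Qed.

(** * Second-order expansion of a generalized plane wave *)

Definition gpw_P_high (kap : R) (e : R -> R -> R) (q : nat) (th x y : R) : C :=
  csum (q + 1) (fun i => csum (q + 1 - i) (fun j =>
    Cmult (lam_high kap e q th i j) (RtoC ((x - xK) ^ i * (y - yK) ^ j)))).

Lemma gpw_P_split kap e q th x y : (1 <= q)%nat ->
  gpw_P kap e q th x y =
  Cplus (0, kap * sqrt (e xK yK) * (cos th * (x - xK) + sin th * (y - yK)))
        (gpw_P_high kap e q th x y).
Proof.
  intros Hq. unfold gpw_P, gpw_P_high.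
  set (mono i j := RtoC ((x - xK) ^ i * (y - yK) ^ j)).
  rewrite (csum_ext _ _ (fun i =>
    Cplus (csum (q + 1 - i) (fun j => Cmult (lam_base kap e th i j) (mono i j)))
          (csum (q + 1 - i) (fun j => Cmult (lam_high kap e q th i j) (mono i j))))).
  2: { intros i _. rewrite <- csum_plus. apply csum_ext. intros j _. unfold lam_high, mono. ring. }
  rewrite csum_plus. f_equal.
  rewrite csum_first_two
    by (lia || (intros i Hi; apply csum_eq0; intros j _; cbv beta; rewrite lam_base_high by lia; ring)).
  rewrite !(csum_first_two (q + 1 - _))
    by (lia || (intros j Hj; cbv beta; rewrite lam_base_high by lia; ring)).
  unfold mono. simpl lam_base. unfold Cplus, Cmult, RtoC; simpl. f_equal; ring.
Qed.

Lemma monomial_abs_le_1 (x y : R) (i j : nat) :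
  in_Khat x y -> Rabs ((x - xK) ^ i * (y - yK) ^ j) <= 1.
Proof.
  intros [Hx Hy]. unfold xK, yK. rewrite Rabs_mult, <- !RPow_abs.
  assert (Hx' : 0 <= Rabs (x - 1 / 2) <= 1) by (split; [apply Rabs_pos|apply Rabs_le; lra]).
  assert (Hy' : 0 <= Rabs (y - 1 / 2) <= 1) by (split; [apply Rabs_pos|apply Rabs_le; lra]).
  pose proof (pow_le _ i (proj1 Hx')). pose proof (pow_le _ j (proj1 Hy')).
  pose proof (pow_incr _ 1 i Hx'). pose proof (pow_incr _ 1 j Hy'). rewrite !pow1 in *. nra.
Qed.

Lemma gpw_P_high_estimates (e : R -> R -> R) (q : nat) : 0 < e xK yK -> (1 <= q)%nat ->
  exists M1, 0 <= M1 /\ forall kap th th' x y, 0 < kap <= 1 -> in_Khat x y ->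
    Cmod (gpw_P_high kap e q th x y) <= M1 * kap ^ 2 /\
    Cmod (Cminus (gpw_P_high kap e q th x y) (gpw_P_high kap e q th' x y)) <= M1 * kap ^ 3.
Proof.
  intros He Hq. destruct (lam_high_estimates e q He Hq) as [M [HM HR]].
  exists ((INR q + 2) ^ 2 * M). split; [apply Rmult_le_pos; [apply pow2_ge_0|auto]|].
  intros kap th th' x y Hk Hxy.
  assert (Hmono : forall (z : C) B i j, Cmod z <= B ->
            Cmod (Cmult z (RtoC ((x - xK) ^ i * (y - yK) ^ j))) <= B).
  { intros z B i j Hz. rewrite Cmod_mult, Cmod_R. pose proof (monomial_abs_le_1 x y i j Hxy).
    pose proof (Cmod_ge_0 z). pose proof (Rabs_pos ((x - xK) ^ i * (y - yK) ^ j)). nra. }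
  rewrite !Rmult_assoc. split.
  - apply csum_triangle_Cmod_le; [apply Rmult_le_pos; auto; apply pow_le; lra|].
    intros i j. apply Hmono, HR; auto.
  - unfold gpw_P_high. rewrite <- csum_minus.
    rewrite (csum_ext _ _ (fun i => csum (q + 1 - i) (fun j =>
      Cmult (Cminus (lam_high kap e q th i j) (lam_high kap e q th' i j))
            (RtoC ((x - xK) ^ i * (y - yK) ^ j))))).
    2: { intros i _. rewrite <- csum_minus. apply csum_ext. intros j _. ring. }
    apply csum_triangle_Cmod_le; [apply Rmult_le_pos; auto; apply pow_le; lra|].
    intros i j. apply Hmono, HR; auto.
Qed.

Lemma exp_taylor1_le (s : R) : Rabs s <= 1 / 2 -> Rabs (exp s - 1 - s) <= 2 * s ^ 2.
Proof.
  intros Hs. apply Rabs_le_between in Hs.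
  pose proof (exp_ineq1_le s). pose proof (exp_ineq1_le (- s)).
  assert (exp s <= / (1 - s)).
  { rewrite <- (Rinv_inv (exp s)). apply Rinv_le_contravar; [lra|]. rewrite <- exp_Ropp. lra. }
  assert (/ (1 - s) - 1 - s = s ^ 2 / (1 - s)) by (field; lra).
  assert (/ (1 - s) <= 2) by (replace 2 with (/ (1 / 2)) by field; apply Rinv_le_contravar; lra).
  assert (s ^ 2 / (1 - s) <= 2 * s ^ 2) by (unfold Rdiv; pose proof (pow2_ge_0 s); nra).
  apply Rabs_le. pose proof (pow2_ge_0 s). lra.
Qed.

Lemma cos_taylor2_le (a : R) : Rabs a <= 1 -> Rabs (cos a - 1 + a ^ 2 / 2) <= a ^ 4 / 24.
Proof.
  intros Ha. apply Rabs_le_between in Ha.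
  pose proof (pre_cos_bound a 0 ltac:(lra) ltac:(lra)) as [H1 H2].
  unfold cos_approx, cos_term in H1, H2. simpl in H1, H2.
  apply Rabs_le. split; simpl in *; nra.
Qed.

Lemma sin_taylor1_le (a : R) : Rabs a <= 1 -> Rabs (sin a - a) <= Rabs a ^ 3.
Proof.
  assert (Hpos : forall b, 0 <= b <= 1 -> Rabs (sin b - b) <= b ^ 3).
  { intros b Hb. pose proof (pre_sin_bound b 0 ltac:(lra) ltac:(lra)) as [H1 H2].
    unfold sin_approx, sin_term in H1, H2. simpl in H1, H2.
    assert (0 <= b ^ 3) by (apply pow_le; lra).
    assert (b ^ 5 <= b ^ 3).
    { replace (b ^ 5) with (b ^ 3 * (b * b)) by ring.
      rewrite <- (Rmult_1_r (b ^ 3)) at 2. apply Rmult_le_compat_l; nra. }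
    apply Rabs_le. field_simplify in H1. field_simplify in H2. split; nra. }
  intros Ha. destruct (Rle_dec 0 a) as [Hnn|Hneg].
  - rewrite (Rabs_pos_eq a) in * by lra. apply Hpos. lra.
  - rewrite (Rabs_left a) in * by lra.
    replace (sin a - a) with (- (sin (- a) - - a)) by (rewrite sin_neg; ring).
    rewrite Rabs_Ropp. apply Hpos. lra.
Qed.

Lemma cos_sub_1_abs_le (t : R) : Rabs t <= 1 -> Rabs (cos t - 1) <= t ^ 2.
Proof.
  intros Ht. pose proof (cos_taylor2_le t Ht).
  replace (cos t - 1) with ((cos t - 1 + t ^ 2 / 2) - t ^ 2 / 2) by ring.
  eapply Rle_trans; [apply Rabs_triang|].
  rewrite Rabs_Ropp, (Rabs_pos_eq (t ^ 2 / 2)) by (pose proof (pow2_ge_0 t); lra).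
  assert (t ^ 2 <= 1) by (rewrite <- pow2_abs; pose proof (Rabs_pos t); simpl; nra).
  assert (t ^ 4 <= t ^ 2)
    by (replace (t ^ 4) with (t ^ 2 * t ^ 2) by ring; pose proof (pow2_ge_0 t); nra).
  pose proof (pow2_ge_0 t). lra.
Qed.

Lemma exp_cos_expansion (s r t0 d : R) :
  0 <= d <= 1 / 2 -> Rabs s <= d ^ 2 -> Rabs r <= d ^ 2 -> Rabs t0 <= d ->
  Rabs (exp s * cos (t0 + r) - (1 + s - t0 ^ 2 / 2)) <= 16 * d ^ 3.
Proof.
  intros Hd Hs Hr Ht0. set (t := t0 + r).
  pose proof (Rabs_pos s). pose proof (Rabs_pos r). pose proof (Rabs_pos t0).
  assert (Hd2 : d ^ 2 <= d / 2) by (simpl; nra).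
  assert (Ht : Rabs t <= 2 * d) by (unfold t; eapply Rle_trans; [apply Rabs_triang|lra]).
  pose proof (Rabs_pos t).
  assert (Ht2 : t ^ 2 <= 4 * d ^ 2) by (rewrite <- pow2_abs; simpl; nra).
  assert (Hs2 : s ^ 2 <= d ^ 4) by (rewrite <- pow2_abs; replace (d ^ 4) with (d ^ 2 * d ^ 2) by ring; simpl in *; nra).
  assert (Hd43 : d ^ 4 <= d ^ 3 / 2)
    by (replace (d ^ 4) with (d ^ 3 * d) by ring; pose proof (pow_le d 3 (proj1 Hd)); nra).
  pose proof (exp_taylor1_le s ltac:(lra)) as E1.
  pose proof (cos_taylor2_le t ltac:(lra)) as E2.
  assert (Hcos : Rabs (cos t) <= 1) by (apply Rabs_le, COS_bound).
  replace (exp s * cos t - (1 + s - t0 ^ 2 / 2)) with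
    ((- r) * (t0 + t) / 2 + (cos t - 1 + t ^ 2 / 2) + s * (cos t - 1) + (exp s - 1 - s) * cos t)
    by (unfold t; field).
  clearbody t.
  assert (B1 : Rabs ((- r) * (t0 + t) / 2) <= 2 * d ^ 3).
  { unfold Rdiv. rewrite !Rabs_mult, Rabs_Ropp, (Rabs_pos_eq (/ 2)) by lra.
    assert (Rabs (t0 + t) <= 3 * d) by (eapply Rle_trans; [apply Rabs_triang|lra]).
    pose proof (Rabs_pos (t0 + t)). simpl in *. nra. }
  assert (B2 : Rabs (cos t - 1 + t ^ 2 / 2) <= d ^ 3).
  { assert (t ^ 4 <= 16 * d ^ 4) by (replace (t ^ 4) with (t ^ 2 * t ^ 2) by ring;
      pose proof (pow2_ge_0 t); replace (16 * d ^ 4) with (4 * d ^ 2 * (4 * d ^ 2)) by ring; nra).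
    pose proof (pow_le d 4 (proj1 Hd)). lra. }
  assert (B3 : Rabs (s * (cos t - 1)) <= 4 * d ^ 4).
  { rewrite Rabs_mult. pose proof (cos_sub_1_abs_le t ltac:(lra)).
    pose proof (Rabs_pos (cos t - 1)). replace (4 * d ^ 4) with (d ^ 2 * (4 * d ^ 2)) by ring.
    apply Rmult_le_compat; lra. }
  assert (B4 : Rabs ((exp s - 1 - s) * cos t) <= 2 * d ^ 4).
  { rewrite Rabs_mult. pose proof (Rabs_pos (cos t)). pose proof (Rabs_pos (exp s - 1 - s)). nra. }
  pose proof (Rabs_triang ((- r) * (t0 + t) / 2 + (cos t - 1 + t ^ 2 / 2) + s * (cos t - 1))
                          ((exp s - 1 - s) * cos t)).
  pose proof (Rabs_triang ((- r) * (t0 + t) / 2 + (cos t - 1 + t ^ 2 / 2)) (s * (cos t - 1))).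
  pose proof (Rabs_triang ((- r) * (t0 + t) / 2) (cos t - 1 + t ^ 2 / 2)).
  assert (0 <= d ^ 3) by (apply pow_le; lra). lra.
Qed.

Lemma exp_sin_expansion (s r t0 d : R) :
  0 <= d <= 1 / 2 -> Rabs s <= d ^ 2 -> Rabs r <= d ^ 2 -> Rabs t0 <= d ->
  Rabs (exp s * sin (t0 + r) - (t0 + r)) <= 16 * d ^ 3.
Proof.
  intros Hd Hs Hr Ht0. set (t := t0 + r).
  pose proof (Rabs_pos s). pose proof (Rabs_pos t0).
  assert (Hd2 : d ^ 2 <= d / 2) by (simpl; nra).
  assert (Ht : Rabs t <= 2 * d) by (unfold t; eapply Rle_trans; [apply Rabs_triang|lra]).
  pose proof (Rabs_pos t).
  assert (Hs2 : s ^ 2 <= d ^ 2 / 4) by (rewrite <- pow2_abs; simpl in *; nra).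
  pose proof (exp_taylor1_le s ltac:(lra)) as E1.
  pose proof (sin_taylor1_le t ltac:(lra)) as E3.
  assert (Ht3 : Rabs t ^ 3 <= 8 * d ^ 3)
    by (replace (8 * d ^ 3) with ((2 * d) ^ 3) by ring; apply pow_incr; lra).
  assert (Hsin : Rabs (sin t) <= 4 * d).
  { replace (sin t) with ((sin t - t) + t) by ring. eapply Rle_trans; [apply Rabs_triang|].
    assert (Rabs t ^ 3 <= Rabs t) by (simpl; nra). lra. }
  assert (Hexp : Rabs (exp s - 1) <= 2 * d ^ 2).
  { replace (exp s - 1) with ((exp s - 1 - s) + s) by ring.
    eapply Rle_trans; [apply Rabs_triang|]. lra. }
  replace (exp s * sin t - t) with ((sin t - t) + (exp s - 1) * sin t) by ring.
  eapply Rle_trans; [apply Rabs_triang|]. rewrite Rabs_mult.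
  pose proof (Rabs_pos (exp s - 1)). pose proof (Rabs_pos (sin t)).
  assert (Rabs (exp s - 1) * Rabs (sin t) <= 2 * d ^ 2 * (4 * d)) by (apply Rmult_le_compat; lra).
  simpl in *. nra.
Qed.

Lemma phase_abs_le (kap e0 th x y : R) : 0 <= kap -> in_Khat x y ->
  Rabs (kap * sqrt e0 * (cos th * (x - xK) + sin th * (y - yK))) <= kap * sqrt e0.
Proof.
  intros Hk [Hx Hy]. unfold xK, yK.
  assert (Hks : 0 <= kap * sqrt e0) by (apply Rmult_le_pos; [lra|apply sqrt_pos]).
  rewrite Rabs_mult, (Rabs_pos_eq (kap * sqrt e0)) by exact Hks.
  assert (Rabs (cos th * (x - 1 / 2) + sin th * (y - 1 / 2)) <= 1).
  { eapply Rle_trans; [apply Rabs_triang|]. rewrite !Rabs_mult.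
    assert (Rabs (cos th) <= 1) by apply Rabs_le, COS_bound.
    assert (Rabs (sin th) <= 1) by apply Rabs_le, SIN_bound.
    assert (Rabs (x - 1 / 2) <= 1 / 2) by (apply Rabs_le; lra).
    assert (Rabs (y - 1 / 2) <= 1 / 2) by (apply Rabs_le; lra).
    pose proof (Rabs_pos (cos th)). pose proof (Rabs_pos (sin th)).
    pose proof (Rabs_pos (x - 1 / 2)). pose proof (Rabs_pos (y - 1 / 2)). nra. }
  nra.
Qed.

Lemma gpw_expansion e q M1 kap th x y :
  (1 <= q)%nat -> 0 <= M1 -> 0 <= kap ->
  (1 + M1 + sqrt (e xK yK)) * kap <= 1 / 2 -> in_Khat x y ->
  Cmod (gpw_P_high kap e q th x y) <= M1 * kap ^ 2 ->
  let t0 := kap * sqrt (e xK yK) * (cos th * (x - xK) + sin th * (y - yK)) in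
  let d := (1 + M1 + sqrt (e xK yK)) * kap in
  Rabs (fst (gpw kap e q th x y) - (1 + fst (gpw_P_high kap e q th x y) - t0 ^ 2 / 2))
    <= 16 * d ^ 3 /\
  Rabs (snd (gpw kap e q th x y) - (t0 + snd (gpw_P_high kap e q th x y))) <= 16 * d ^ 3.
Proof.
  intros Hq HM1 Hk Hd Hxy Hhigh t0 d.
  pose proof (sqrt_pos (e xK yK)).
  assert (Hd0 : 0 <= d <= 1 / 2) by (unfold d; split; [apply Rmult_le_pos|]; lra).
  assert (Hhd : M1 * kap ^ 2 <= d ^ 2)
    by (unfold d; rewrite Rpow_mult_distr; apply Rmult_le_compat_r; [apply pow2_ge_0|simpl; nra]).
  assert (Ht0 : Rabs t0 <= d).
  { eapply Rle_trans; [apply phase_abs_le; auto|]. unfold d. nra. }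
  unfold gpw. rewrite gpw_P_split by exact Hq. fold t0.
  pose proof (Rabs_fst_le_Cmod (gpw_P_high kap e q th x y)).
  pose proof (Rabs_snd_le_Cmod (gpw_P_high kap e q th x y)).
  destruct (gpw_P_high kap e q th x y) as [s r]. simpl in *.
  replace (0 + s) with s by ring.
  split; [apply exp_cos_expansion|apply exp_sin_expansion]; auto; lra.
Qed.

(** * Discrete moments of equispaced directions *)

Definition theta_dir (p l : nat) : R := 2 * PI * INR l / INR p.

Lemma sum_telescope (g : nat -> R) (N : nat) :
  sum_f_R0 (fun l => g (S l) - g l) N = g (S N) - g 0%nat.
Proof. induction N as [|N IH]; simpl; [ring|]. rewrite IH. ring. Qed.

(* Multiplying by [2 sin (x/2)] turns both sums into telescoping sums. *)
Lemma sum_cos_sin_arith_eq0 (p k : nat) (x : R) :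
  (1 <= p)%nat -> 0 < x / 2 < PI -> INR p * x = 2 * INR k * PI ->
  sum_f_R0 (fun l => cos (INR l * x)) (p - 1) = 0 /\
  sum_f_R0 (fun l => sin (INR l * x)) (p - 1) = 0.
Proof.
  intros Hp Hx Hpx.
  assert (Hs : 0 < sin (x / 2)) by (apply sin_gt_0; lra).
  assert (Hpp : S (p - 1) = p) by lia.
  assert (Hend : forall f : R -> R, (forall z, f (z + 2 * INR k * PI) = f z) ->
            f (INR (S (p - 1)) * x - x / 2) = f (INR 0 * x - x / 2)).
  { intros f Hf. rewrite Hpp, Hpx. simpl INR.
    replace (2 * INR k * PI - x / 2) with (- (x / 2) + 2 * INR k * PI) by ring.
    rewrite Hf. f_equal. ring. }
  split; apply (Rmult_eq_reg_l (2 * sin (x / 2))); try lra; rewrite Rmult_0_r, scal_sum.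
  - rewrite (sum_eq _ (fun l => sin (INR (S l) * x - x / 2) - sin (INR l * x - x / 2))).
    + rewrite (sum_telescope (fun l => sin (INR l * x - x / 2))), (Hend sin (fun z => sin_period z k)). ring.
    + intros l _. rewrite S_INR.
      replace ((INR l + 1) * x - x / 2) with (INR l * x + x / 2) by field.
      rewrite sin_plus, sin_minus. ring.
  - rewrite (sum_eq _ (fun l => (cos (INR (S l) * x - x / 2) - cos (INR l * x - x / 2)) * -1)).
    + rewrite <- scal_sum, (sum_telescope (fun l => cos (INR l * x - x / 2))),
        (Hend cos (fun z => cos_period z k)). ring.
    + intros l _. rewrite S_INR.
      replace ((INR l + 1) * x - x / 2) with (INR l * x + x / 2) by field.
      rewrite cos_plus, cos_minus. ring.
Qed.

Lemma sum_dir_multiple_eq0 (p k : nat) : (1 <= k < p)%nat ->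
  sum_f_R0 (fun l => cos (INR k * theta_dir p l)) (p - 1) = 0 /\
  sum_f_R0 (fun l => sin (INR k * theta_dir p l)) (p - 1) = 0.
Proof.
  intros Hk.
  assert (Hp0 : 0 < INR p) by (apply lt_0_INR; lia).
  assert (Hkp : INR k < INR p) by (apply lt_INR; lia).
  assert (Hk0 : 1 <= INR k) by (apply (le_INR 1); lia).
  pose proof PI_RGT_0.
  assert (Hang : forall l, INR k * theta_dir p l = INR l * (2 * PI * INR k / INR p))
    by (intros; unfold theta_dir; field; lra).
  assert (Hsum : forall f : R -> R,
            sum_f_R0 (fun l => f (INR k * theta_dir p l)) (p - 1)
            = sum_f_R0 (fun l => f (INR l * (2 * PI * INR k / INR p))) (p - 1))
    by (intros f; apply sum_eq; intros; rewrite Hang; reflexivity).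
  rewrite (Hsum cos), (Hsum sin).
  apply (sum_cos_sin_arith_eq0 p k); [lia| |field; lra].
  replace (2 * PI * INR k / INR p / 2) with (PI * (INR k / INR p)) by (field; lra).
  assert (0 < INR k / INR p < 1).
  { split; [apply Rdiv_lt_0_compat; lra|].
    apply (Rmult_lt_reg_r (INR p)); [lra|]. unfold Rdiv. rewrite Rmult_assoc, Rinv_l; lra. }
  split; nra.
Qed.

Definition trig_cubic (a0 a1 a2 a3 a4 a5 a6 a7 a8 a9 c s : R) : R :=
  a0 + a1 * c + a2 * s + a3 * c ^ 2 + a4 * s ^ 2 + a5 * (c * s)
  + a6 * c ^ 3 + a7 * (c ^ 2 * s) + a8 * (c * s ^ 2) + a9 * s ^ 3.

Lemma cos_3a (t : R) : cos (3 * t) = cos t ^ 3 - 3 * cos t * sin t ^ 2.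
Proof. replace (3 * t) with (2 * t + t) by ring. rewrite cos_plus, cos_2a, sin_2a. ring. Qed.

Lemma sin_3a (t : R) : sin (3 * t) = 3 * cos t ^ 2 * sin t - sin t ^ 3.
Proof. replace (3 * t) with (2 * t + t) by ring. rewrite sin_plus, cos_2a, sin_2a. ring. Qed.

Lemma trig_cubic_harmonics (a0 a1 a2 a3 a4 a5 a6 a7 a8 a9 t : R) :
  trig_cubic a0 a1 a2 a3 a4 a5 a6 a7 a8 a9 (cos t) (sin t) =
    (a0 + (a3 + a4) / 2)
    + ((a1 + (3 * a6 + a8) / 4) * cos (INR 1 * t) + (a2 + (a7 + 3 * a9) / 4) * sin (INR 1 * t))
    + ((a3 - a4) / 2 * cos (INR 2 * t) + a5 / 2 * sin (INR 2 * t))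
    + ((a6 - a8) / 4 * cos (INR 3 * t) + (a7 - a9) / 4 * sin (INR 3 * t)).
Proof.
  replace (INR 1) with 1 by reflexivity. replace (INR 2) with 2 by (simpl; lra).
  replace (INR 3) with 3 by (simpl; lra).
  rewrite Rmult_1_l, cos_2a, sin_2a, cos_3a, sin_3a. unfold trig_cubic.
  assert (Hcs : cos t ^ 2 + sin t ^ 2 - 1 = 0) by (pose proof (sin2_cos2 t); unfold Rsqr in *; simpl; lra).
  match goal with |- ?lhs = ?rhs =>
    replace lhs with (rhs + ((a3 + a4) / 2 + (3 * a6 + a8) / 4 * cos t + (a7 + 3 * a9) / 4 * sin t)
                        * (cos t ^ 2 + sin t ^ 2 - 1)) by field end.
  rewrite Hcs. field.
Qed.

Lemma sum_scal_l (a : R) (f : nat -> R) (N : nat) :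
  sum_f_R0 (fun l => a * f l) N = a * sum_f_R0 f N.
Proof. induction N as [|N IH]; simpl; [|rewrite IH]; ring. Qed.

Lemma sum_dir_harmonic_eq0 (p k : nat) (u v : R) : (1 <= k < p)%nat ->
  sum_f_R0 (fun l => u * cos (INR k * theta_dir p l) + v * sin (INR k * theta_dir p l)) (p - 1) = 0.
Proof.
  intros Hk. destruct (sum_dir_multiple_eq0 p k Hk) as [Hc Hs].
  rewrite sum_plus, !sum_scal_l, Hc, Hs. ring.
Qed.

(* The discrete moments of order 1 and 3 of [p >= 4] equispaced directions vanish, those of
   order 2 are [p/2, p/2, 0]. *)
Lemma sum_dir_trig_cubic (p : nat) (a0 a1 a2 a3 a4 a5 a6 a7 a8 a9 : R) : (4 <= p)%nat ->
  sum_f_R0 (fun l => trig_cubic a0 a1 a2 a3 a4 a5 a6 a7 a8 a9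
                       (cos (theta_dir p l)) (sin (theta_dir p l))) (p - 1)
  = INR p * (a0 + (a3 + a4) / 2).
Proof.
  intros Hp. erewrite sum_eq; [|intros l _; apply trig_cubic_harmonics].
  do 3 rewrite sum_plus. rewrite sum_cte, !sum_dir_harmonic_eq0 by lia.
  replace (S (p - 1)) with p by lia. ring.
Qed.

(** * The approximating combination *)

Definition phase_dir (p : nat) (kap se X Y : R) (l : nat) : R :=
  kap * se * (cos (theta_dir p l) * X + sin (theta_dir p l) * Y).

(* The combination reproducing [u + b X + c Y]: [u] is carried by the constant term of the
   waves, [b X + c Y] by the phase [i t_l] through the first discrete moments. *)
Definition approx_coeff (p : nat) (kap se u b c : R) (l : nat) : C :=
  (u / INR p,
   - (2 / (INR p * kap * se)) * (b * cos (theta_dir p l) + c * sin (theta_dir p l))).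

Lemma approx_coeff_snd_abs_le p kap se u b c l : 0 < INR p -> 0 < kap -> 0 < se ->
  Rabs (snd (approx_coeff p kap se u b c l)) <= 2 / (INR p * kap * se) * (Rabs b + Rabs c).
Proof.
  intros Hp Hk Hse. unfold approx_coeff. simpl.
  assert (0 < 2 / (INR p * kap * se))
    by (apply Rdiv_lt_0_compat; [lra|]; repeat apply Rmult_lt_0_compat; lra).
  rewrite Rabs_mult, Rabs_Ropp, Rabs_pos_eq by lra. apply Rmult_le_compat_l; [lra|].
  eapply Rle_trans; [apply Rabs_triang|]. rewrite !Rabs_mult.
  assert (Rabs (cos (theta_dir p l)) <= 1) by apply Rabs_le, COS_bound.
  assert (Rabs (sin (theta_dir p l)) <= 1) by apply Rabs_le, SIN_bound.
  pose proof (Rabs_pos b). pose proof (Rabs_pos c).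
  pose proof (Rabs_pos (cos (theta_dir p l))). pose proof (Rabs_pos (sin (theta_dir p l))). nra.
Qed.

Lemma sum_weighted_abs_le (N : nat) (a : R) (bw e1 e2 : nat -> R) (E D : R) :
  (forall l, Rabs (e1 l) <= E) -> (forall l, Rabs (e2 l) <= E) -> (forall l, Rabs (bw l) <= D) ->
  Rabs (sum_f_R0 (fun l => a * e1 l + bw l * e2 l) N) <= INR (S N) * ((Rabs a + D) * E).
Proof.
  intros H1 H2 H3.
  eapply Rle_trans; [apply sum_f_R0_triangle|].
  replace (INR (S N) * ((Rabs a + D) * E)) with ((Rabs a + D) * E * INR (S N)) by ring.
  rewrite <- sum_cte. apply sum_Rle. intros l _.
  eapply Rle_trans; [apply Rabs_triang|]. rewrite !Rabs_mult.
  specialize (H1 l). specialize (H2 l). specialize (H3 l).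
  pose proof (Rabs_pos a). pose proof (Rabs_pos (bw l)). pose proof (Rabs_pos (e1 l)).
  pose proof (Rabs_pos (e2 l)).
  assert (Rabs a * Rabs (e1 l) <= Rabs a * E) by (apply Rmult_le_compat_l; auto).
  assert (Rabs (bw l) * Rabs (e2 l) <= D * E) by (apply Rmult_le_compat; auto; lra).
  lra.
Qed.

Section ApproxCombination.

Variables (p : nat) (kap se u b c X Y s0 r0 : R) (w : nat -> C).
Hypotheses (Hp : (4 <= p)%nat) (Hkap : 0 < kap) (Hse : 0 < se).

Let cr : R := u / INR p.
Let ci (l : nat) : R := snd (approx_coeff p kap se u b c l).
Let t (l : nat) : R := phase_dir p kap se X Y l.
Let err1 (l : nat) : R := fst (w l) - (1 + s0 - t l ^ 2 / 2).
Let err2 (l : nat) : R := snd (w l) - (t l + r0).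

Lemma INR_p_pos : 0 < INR p.
Proof. apply lt_0_INR; lia. Qed.

Lemma approx_comb_fst :
  fst (csum (p - 1) (fun l => Cmult (approx_coeff p kap se u b c l) (w l)))
  = u + b * X + c * Y + (u * s0 - u * kap ^ 2 * se ^ 2 * (X ^ 2 + Y ^ 2) / 4)
    + sum_f_R0 (fun l => cr * err1 l + (- ci l) * err2 l) (p - 1).
Proof.
  pose proof INR_p_pos. set (g := 2 / (INR p * kap * se)).
  rewrite csum_fst.
  rewrite (sum_eq _ (fun l =>
    trig_cubic (cr * (1 + s0)) (g * b * r0) (g * c * r0)
      (- cr * kap ^ 2 * se ^ 2 * X ^ 2 / 2 + g * kap * se * b * X)
      (- cr * kap ^ 2 * se ^ 2 * Y ^ 2 / 2 + g * kap * se * c * Y)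
      (- cr * kap ^ 2 * se ^ 2 * X * Y + g * kap * se * (b * Y + c * X)) 0 0 0 0
      (cos (theta_dir p l)) (sin (theta_dir p l))
    + (cr * err1 l + (- ci l) * err2 l))).
  - rewrite sum_plus, sum_dir_trig_cubic by exact Hp. unfold cr, g. field. lra.
  - intros l _. unfold trig_cubic, err1, err2, cr, ci, t, phase_dir, approx_coeff, g. simpl.
    field; repeat split; lra.
Qed.

Lemma approx_comb_snd :
  snd (csum (p - 1) (fun l => Cmult (approx_coeff p kap se u b c l) (w l)))
  = u * r0 + sum_f_R0 (fun l => cr * err2 l + ci l * err1 l) (p - 1).
Proof.
  pose proof INR_p_pos. set (g := 2 / (INR p * kap * se)).
  rewrite csum_snd.
  rewrite (sum_eq _ (fun l =>
    trig_cubic (cr * r0) (cr * kap * se * X - g * b * (1 + s0))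
      (cr * kap * se * Y - g * c * (1 + s0)) 0 0 0
      (g * kap ^ 2 * se ^ 2 / 2 * b * X ^ 2)
      (g * kap ^ 2 * se ^ 2 / 2 * (2 * b * X * Y + c * X ^ 2))
      (g * kap ^ 2 * se ^ 2 / 2 * (b * Y ^ 2 + 2 * c * X * Y))
      (g * kap ^ 2 * se ^ 2 / 2 * c * Y ^ 2)
      (cos (theta_dir p l)) (sin (theta_dir p l))
    + (cr * err2 l + ci l * err1 l))).
  - rewrite sum_plus, sum_dir_trig_cubic by exact Hp. unfold cr. field. lra.
  - intros l _. unfold trig_cubic, err1, err2, cr, ci, t, phase_dir, approx_coeff, g. simpl.
    field; repeat split; lra.
Qed.

Lemma approx_comb_error_le (E : R) :
  (forall l, Rabs (err1 l) <= E /\ Rabs (err2 l) <= E) ->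
  Cmod (Cminus (RtoC (u + b * X + c * Y))
               (csum (p - 1) (fun l => Cmult (approx_coeff p kap se u b c l) (w l))))
    <= Rabs u * (Rabs s0 + Rabs r0 + kap ^ 2 * se ^ 2 * (X ^ 2 + Y ^ 2) / 4)
       + 2 * ((Rabs u + 2 * (Rabs b + Rabs c) / (kap * se)) * E).
Proof.
  intros Herr. pose proof INR_p_pos.
  eapply Rle_trans; [apply Cmod_le_Rabs_fst_snd|]. cbn [fst snd Cminus Cplus Copp RtoC].
  rewrite approx_comb_fst, approx_comb_snd.
  set (D := 2 / (INR p * kap * se) * (Rabs b + Rabs c)).
  assert (Hci : forall l, Rabs (ci l) <= D) by (intros; apply approx_coeff_snd_abs_le; auto).
  assert (HE : INR (S (p - 1)) * ((Rabs cr + D) * E)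
               = (Rabs u + 2 * (Rabs b + Rabs c) / (kap * se)) * E).
  { replace (S (p - 1)) with p by lia. unfold cr, D, Rdiv.
    rewrite Rabs_mult, Rabs_inv, (Rabs_pos_eq (INR p)) by lra. field. repeat split; lra. }
  assert (Hci' : forall l, Rabs (- ci l) <= D) by (intros; rewrite Rabs_Ropp; apply Hci).
  pose proof (sum_weighted_abs_le (p - 1) cr (fun l => - ci l) err1 err2 E D
                (fun l => proj1 (Herr l)) (fun l => proj2 (Herr l)) Hci') as HSre.
  pose proof (sum_weighted_abs_le (p - 1) cr ci err2 err1 E D
                (fun l => proj2 (Herr l)) (fun l => proj1 (Herr l)) Hci) as HSim.
  rewrite HE in HSre, HSim.
  set (Sre := sum_f_R0 (fun l => cr * err1 l + - ci l * err2 l) (p - 1)) in *.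
  set (Sim := sum_f_R0 (fun l => cr * err2 l + ci l * err1 l) (p - 1)) in *.
  assert (Hq : 0 <= kap ^ 2 * se ^ 2 * (X ^ 2 + Y ^ 2) / 4)
    by (pose proof (pow2_ge_0 kap); pose proof (pow2_ge_0 se); pose proof (pow2_ge_0 X);
        pose proof (pow2_ge_0 Y); unfold Rdiv; apply Rmult_le_pos; [|lra];
        apply Rmult_le_pos; [apply Rmult_le_pos|]; lra).
  replace (u + b * X + c * Y + - (u + b * X + c * Y + (u * s0 - u * kap ^ 2 * se ^ 2 * (X ^ 2 + Y ^ 2) / 4) + Sre))
    with (- (u * s0) + u * (kap ^ 2 * se ^ 2 * (X ^ 2 + Y ^ 2) / 4) - Sre) by field.
  replace (0 + - (u * r0 + Sim)) with (- (u * r0) - Sim) by ring.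
  unfold Rminus.
  pose proof (Rabs_triang (- (u * s0) + u * (kap ^ 2 * se ^ 2 * (X ^ 2 + Y ^ 2) / 4)) (- Sre)).
  pose proof (Rabs_triang (- (u * s0)) (u * (kap ^ 2 * se ^ 2 * (X ^ 2 + Y ^ 2) / 4))).
  pose proof (Rabs_triang (- (u * r0)) (- Sim)).
  rewrite !Rabs_Ropp, !Rabs_mult, (Rabs_pos_eq (kap ^ 2 * se ^ 2 * (X ^ 2 + Y ^ 2) / 4)) in * by exact Hq.
  lra.
Qed.

End ApproxCombination.

Lemma gpw_near_common_expansion e q M1 kap th th0 x y :
  (1 <= q)%nat -> 0 <= M1 -> 0 <= kap ->
  (1 + M1 + sqrt (e xK yK)) * kap <= 1 / 2 -> in_Khat x y ->
  Cmod (gpw_P_high kap e q th x y) <= M1 * kap ^ 2 ->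
  Cmod (Cminus (gpw_P_high kap e q th x y) (gpw_P_high kap e q th0 x y)) <= M1 * kap ^ 3 ->
  let t0 := kap * sqrt (e xK yK) * (cos th * (x - xK) + sin th * (y - yK)) in
  let E := (16 * (1 + M1 + sqrt (e xK yK)) ^ 3 + M1) * kap ^ 3 in
  Rabs (fst (gpw kap e q th x y) - (1 + fst (gpw_P_high kap e q th0 x y) - t0 ^ 2 / 2)) <= E /\
  Rabs (snd (gpw kap e q th x y) - (t0 + snd (gpw_P_high kap e q th0 x y))) <= E.
Proof.
  intros Hq HM1 Hk Hd Hxy Hhigh Hdiff t0 E.
  destruct (gpw_expansion e q M1 kap th x y Hq HM1 Hk Hd Hxy Hhigh) as [G1 G2]. fold t0 in G1, G2.
  pose proof (Rabs_fst_le_Cmod (Cminus (gpw_P_high kap e q th x y) (gpw_P_high kap e q th0 x y))).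
  pose proof (Rabs_snd_le_Cmod (Cminus (gpw_P_high kap e q th x y) (gpw_P_high kap e q th0 x y))).
  destruct (gpw_P_high kap e q th x y) as [s r], (gpw_P_high kap e q th0 x y) as [s' r'].
  cbn [fst snd Cminus Cplus Copp] in *. rewrite Rpow_mult_distr in G1, G2. unfold E.
  split.
  - replace (fst (gpw kap e q th x y) - (1 + s' - t0 ^ 2 / 2))
      with ((fst (gpw kap e q th x y) - (1 + s - t0 ^ 2 / 2)) + (s + - s')) by ring.
    eapply Rle_trans; [apply Rabs_triang|]. lra.
  - replace (snd (gpw kap e q th x y) - (t0 + r'))
      with ((snd (gpw kap e q th x y) - (t0 + r)) + (r + - r')) by ring.
    eapply Rle_trans; [apply Rabs_triang|]. lra.
Qed.

Lemma approx_error_budget (u b c M1 e0 se E kap s0 r0 Q : R) :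
  0 <= M1 -> 0 <= e0 -> 0 < se -> 0 <= E -> 0 < kap <= 1 -> 0 <= Q <= 1 ->
  Rabs s0 <= M1 * kap ^ 2 -> Rabs r0 <= M1 * kap ^ 2 ->
  Rabs u * (Rabs s0 + Rabs r0 + kap ^ 2 * e0 * Q / 4)
  + 2 * ((Rabs u + 2 * (Rabs b + Rabs c) / (kap * se)) * (E * kap ^ 3))
    <= (2 * M1 + e0 + 2 * E + 4 * E / se) * (Rabs u + Rabs b + Rabs c) * kap ^ 2.
Proof.
  intros HM1 He0 Hse HE Hk HQ Hs0 Hr0.
  assert (HU : 0 <= Rabs u) by apply Rabs_pos.
  assert (HB : 0 <= Rabs b + Rabs c) by (pose proof (Rabs_pos b); pose proof (Rabs_pos c); lra).
  replace (Rabs u + Rabs b + Rabs c) with (Rabs u + (Rabs b + Rabs c)) by ring.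
  revert HU HB. generalize (Rabs u) (Rabs b + Rabs c). intros U B HU HB.
  assert (Hk2 : 0 < kap ^ 2) by (apply pow_lt; lra).
  assert (T1 : U * (Rabs s0 + Rabs r0 + kap ^ 2 * e0 * Q / 4) <= U * ((2 * M1 + e0) * kap ^ 2)).
  { apply Rmult_le_compat_l; [exact HU|].
    assert (0 <= kap ^ 2 * e0) by nra.
    assert (kap ^ 2 * e0 * Q <= kap ^ 2 * e0)
      by (rewrite <- (Rmult_1_r (kap ^ 2 * e0)) at 2; apply Rmult_le_compat_l; lra).
    replace ((2 * M1 + e0) * kap ^ 2) with (2 * (M1 * kap ^ 2) + kap ^ 2 * e0) by ring.
    lra. }
  assert (T2 : 2 * ((U + 2 * B / (kap * se)) * (E * kap ^ 3))
               <= 2 * E * U * kap ^ 2 + 4 * E / se * B * kap ^ 2).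
  { replace (2 * ((U + 2 * B / (kap * se)) * (E * kap ^ 3)))
      with (2 * E * U * kap ^ 3 + 4 * E / se * B * kap ^ 2) by (field; lra).
    apply Rplus_le_compat_r. apply Rmult_le_compat_l; [nra|]. simpl; nra. }
  assert (0 <= 4 * E / se * U * kap ^ 2)
    by (apply Rmult_le_pos; [apply Rmult_le_pos|]; try apply Rdiv_le_0_compat; lra).
  assert (0 <= (2 * M1 + e0 + 2 * E) * B * kap ^ 2)
    by (apply Rmult_le_pos; [apply Rmult_le_pos|]; lra).
  replace ((2 * M1 + e0 + 2 * E + 4 * E / se) * (U + B) * kap ^ 2)
    with (U * ((2 * M1 + e0) * kap ^ 2) + 2 * E * U * kap ^ 2 + 4 * E / se * B * kap ^ 2
          + 4 * E / se * U * kap ^ 2 + (2 * M1 + e0 + 2 * E) * B * kap ^ 2) by ring.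
  lra.
Qed.

Lemma gpw_comb_approx_affine (e : R -> R -> R) (p q : nat) :
  0 < e xK yK -> (1 <= q)%nat -> (4 <= p)%nat ->
  exists K k1, 0 <= K /\ 0 < k1 /\
  forall kap, 0 < kap <= k1 -> forall u b c x y, in_Khat x y ->
    Cmod (Cminus (RtoC (u + b * (x - xK) + c * (y - yK)))
                 (gpw_comb kap e p q (approx_coeff p kap (sqrt (e xK yK)) u b c) x y))
      <= K * (Rabs u + Rabs b + Rabs c) * kap ^ 2.
Proof.
  intros He Hq Hp. destruct (gpw_P_high_estimates e q He Hq) as [M1 [HM1 Hhigh]].
  set (se := sqrt (e xK yK)). set (A := 1 + M1 + se).
  assert (Hse : 0 < se) by (apply sqrt_lt_R0; exact He).
  assert (Hse2 : se ^ 2 = e xK yK) by (unfold se; simpl; rewrite Rmult_1_r; apply sqrt_sqrt; lra).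
  set (E' := 16 * A ^ 3 + M1).
  assert (HE' : 0 <= E') by (unfold E', A; pose proof (pow_le (1 + M1 + se) 3); lra).
  exists (2 * M1 + e xK yK + 2 * E' + 4 * E' / se), (1 / (2 * A)).
  split; [assert (0 <= 4 * E' / se) by (apply Rdiv_le_0_compat; lra); lra|].
  split; [apply Rdiv_lt_0_compat; unfold A; lra|].
  intros kap [Hk Hk1] u b c x y Hxy.
  assert (HAk : A * kap <= 1 / 2)
    by (apply (Rmult_le_compat_l A) in Hk1; [|unfold A; lra];
        replace (A * (1 / (2 * A))) with (1 / 2) in Hk1 by (field; unfold A; lra); lra).
  assert (Hk1' : kap <= 1) by (unfold A in HAk; nra).
  set (s0 := fst (gpw_P_high kap e q (theta_dir p 0) x y)).
  set (r0 := snd (gpw_P_high kap e q (theta_dir p 0) x y)).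
  eapply Rle_trans.
  { apply (approx_comb_error_le p kap se u b c (x - xK) (y - yK) s0 r0
             (fun l => gpw kap e q (theta_dir p l) x y) Hp Hk Hse (E' * kap ^ 3)).
    intros l. destruct (Hhigh kap (theta_dir p l) (theta_dir p 0) x y (conj Hk Hk1') Hxy).
    exact (gpw_near_common_expansion e q M1 kap _ _ x y Hq HM1 (Rlt_le _ _ Hk) HAk Hxy H H0). }
  destruct (Hhigh kap (theta_dir p 0) (theta_dir p 0) x y (conj Hk Hk1') Hxy) as [H0 _].
  assert (Hs0 : Rabs s0 <= M1 * kap ^ 2) by (eapply Rle_trans; [apply Rabs_fst_le_Cmod|exact H0]).
  assert (Hr0 : Rabs r0 <= M1 * kap ^ 2) by (eapply Rle_trans; [apply Rabs_snd_le_Cmod|exact H0]).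
  rewrite Hse2. apply approx_error_budget; auto; try lra.
  pose proof (pow2_ge_0 (x - xK)). pose proof (pow2_ge_0 (y - yK)). split; [lra|].
  destruct Hxy as [Hx Hy]. unfold xK, yK in *. simpl in *. nra.
Qed.

(** * Continuity and [L^2] norms on the unit square *)

Definition continuous2 (h : R -> R -> R) : Prop :=
  forall z : R * R, continuous (fun w : R * R => h (fst w) (snd w)) z.

Definition Ccontinuous2 (G : R -> R -> C) : Prop :=
  continuous2 (fun x y => fst (G x y)) /\ continuous2 (fun x y => snd (G x y)).

Lemma continuous2_const (c : R) : continuous2 (fun _ _ => c).
Proof. intros z. apply continuous_const. Qed.

Lemma continuous2_x : continuous2 (fun x _ => x).
Proof. intros [x y]. apply continuous_fst. Qed.

Lemma continuous2_y : continuous2 (fun _ y => y).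
Proof. intros [x y]. apply continuous_snd. Qed.

Lemma continuous2_plus f g :
  continuous2 f -> continuous2 g -> continuous2 (fun x y => f x y + g x y).
Proof.
  intros Hf Hg z.
  apply (continuous_plus (fun w : R * R => f (fst w) (snd w)) (fun w : R * R => g (fst w) (snd w)));
    auto.
Qed.

Lemma continuous2_mult f g :
  continuous2 f -> continuous2 g -> continuous2 (fun x y => f x y * g x y).
Proof.
  intros Hf Hg z.
  apply (continuous_mult (fun w : R * R => f (fst w) (snd w)) (fun w : R * R => g (fst w) (snd w)));
    auto.
Qed.

Lemma continuous2_opp f : continuous2 f -> continuous2 (fun x y => - f x y).
Proof. intros Hf z. apply (continuous_opp (fun w : R * R => f (fst w) (snd w))). auto. Qed.

Lemma continuous2_minus f g :
  continuous2 f -> continuous2 g -> continuous2 (fun x y => f x y - g x y).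
Proof. intros. apply continuous2_plus; auto. apply continuous2_opp; auto. Qed.

Lemma continuous2_pow f n : continuous2 f -> continuous2 (fun x y => f x y ^ n).
Proof.
  intros Hf. induction n; simpl; [apply continuous2_const|]. apply continuous2_mult; auto.
Qed.

Lemma continuous2_comp (phi : R -> R) f :
  (forall t, continuous phi t) -> continuous2 f -> continuous2 (fun x y => phi (f x y)).
Proof. intros Hphi Hf z. apply (continuous_comp (fun w : R * R => f (fst w) (snd w)) phi); auto. Qed.

Lemma Ccontinuous2_RtoC f : continuous2 f -> Ccontinuous2 (fun x y => RtoC (f x y)).
Proof. intros H. split; [exact H|exact (continuous2_const 0)]. Qed.

Lemma Ccontinuous2_const (c : C) : Ccontinuous2 (fun _ _ => c).
Proof. split; apply continuous2_const. Qed.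

Lemma Ccontinuous2_plus F G :
  Ccontinuous2 F -> Ccontinuous2 G -> Ccontinuous2 (fun x y => Cplus (F x y) (G x y)).
Proof. intros [F1 F2] [G1 G2]. split; apply continuous2_plus; auto. Qed.

Lemma Ccontinuous2_minus F G :
  Ccontinuous2 F -> Ccontinuous2 G -> Ccontinuous2 (fun x y => Cminus (F x y) (G x y)).
Proof. intros [F1 F2] [G1 G2]. split; apply continuous2_plus; auto; apply continuous2_opp; auto. Qed.

Lemma Ccontinuous2_mult F G :
  Ccontinuous2 F -> Ccontinuous2 G -> Ccontinuous2 (fun x y => Cmult (F x y) (G x y)).
Proof.
  intros [F1 F2] [G1 G2]. split; simpl.
  - apply continuous2_minus; apply continuous2_mult; auto.
  - apply continuous2_plus; apply continuous2_mult; auto.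
Qed.

Lemma Ccontinuous2_Cexp F : Ccontinuous2 F -> Ccontinuous2 (fun x y => Cexp (F x y)).
Proof.
  intros [F1 F2].
  split; simpl; apply continuous2_mult; apply continuous2_comp; auto using continuous_exp,
    continuous_cos, continuous_sin.
Qed.

Lemma Ccontinuous2_csum n (F : nat -> R -> R -> C) :
  (forall k, Ccontinuous2 (F k)) -> Ccontinuous2 (fun x y => csum n (fun k => F k x y)).
Proof.
  intros H. induction n as [|n IH]; simpl; [apply H|].
  apply (Ccontinuous2_plus (fun x y => csum n (fun k => F k x y)) (F (S n))); auto.
Qed.

Lemma gpw_Ccontinuous2 kap e q th : Ccontinuous2 (fun x y => gpw kap e q th x y).
Proof.
  apply (Ccontinuous2_Cexp (fun x y => gpw_P kap e q th x y)).
  apply (Ccontinuous2_csum (q + 1) (fun i x y => csum (q + 1 - i) (fun j =>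
     Cmult (lam kap e q th i j) (RtoC ((x - xK) ^ i * (y - yK) ^ j))))).
  intros i.
  apply (Ccontinuous2_csum (q + 1 - i)
           (fun j x y => Cmult (lam kap e q th i j) (RtoC ((x - xK) ^ i * (y - yK) ^ j)))).
  intros j.
  apply (Ccontinuous2_mult (fun _ _ => lam kap e q th i j)
           (fun x y => RtoC ((x - xK) ^ i * (y - yK) ^ j))); [apply Ccontinuous2_const|].
  apply Ccontinuous2_RtoC, continuous2_mult; apply continuous2_pow, continuous2_minus;
    auto using continuous2_x, continuous2_y, continuous2_const.
Qed.

Lemma gpw_comb_Ccontinuous2 kap e p q (cf : nat -> C) :
  Ccontinuous2 (fun x y => gpw_comb kap e p q cf x y).
Proof.
  apply (Ccontinuous2_csum (p - 1)
           (fun l x y => Cmult (cf l) (gpw kap e q (2 * PI * INR l / INR p) x y))).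
  intros l. apply (Ccontinuous2_mult (fun _ _ => cf l)); [apply Ccontinuous2_const|].
  apply gpw_Ccontinuous2.
Qed.

Lemma continuous2_slice h u y : continuous2 h -> continuous (fun t => h u t) y.
Proof.
  intros H. apply (continuous_comp_2 (fun _ => u) (fun t => t) h);
    [apply continuous_const|apply continuous_id|apply H].
Qed.

Lemma continuous2_ex_RInt h u : continuous2 h -> ex_RInt (fun t => h u t) 0 1.
Proof.
  intros H. apply (@ex_RInt_continuous R_CompleteNormedModule). intros; apply continuous2_slice; auto.
Qed.

(* Uniform continuity on a compact strip around [z] makes the inner integral continuous. *)
Lemma RInt_inner_continuous h z : continuous2 h -> continuous (fun x => RInt (fun y => h x y) 0 1) z.
Proof.
  intros H. apply continuity_pt_filterlim.
  unfold continuity_pt, continue_in, limit1_in, limit_in. intros eps Heps. simpl. unfold R_dist.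
  destruct (uniform_continuity_2d h (z - 1) (z + 1) 0 1
              (fun x y _ _ => proj2 (continuity_2d_pt_filterlim h x y) (H (x, y)))
              (mkposreal (eps / 2) ltac:(lra))) as [d Hd].
  exists (Rmin d 1). split; [apply Rmin_pos; [apply cond_pos|lra]|].
  intros x [_ Hx].
  assert (Hx1 : Rabs (x - z) < d) by (eapply Rlt_le_trans; [apply Hx|apply Rmin_l]).
  assert (Hx2 : Rabs (x - z) < 1) by (eapply Rlt_le_trans; [apply Hx|apply Rmin_r]).
  apply Rabs_def2 in Hx2.
  pose proof (RInt_minus (fun y => h x y) (fun y => h z y) 0 1
                (continuous2_ex_RInt h x H) (continuous2_ex_RInt h z H)) as E.
  unfold minus, plus, opp in E; simpl in E.
  replace (RInt (fun y : R => h x y) 0 1 - RInt (fun y : R => h z y) 0 1)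
    with (RInt (fun y => h x y + - h z y) 0 1) by (rewrite E; reflexivity).
  eapply Rle_lt_trans; [apply abs_RInt_le_const with (M := eps / 2)|lra].
  - lra.
  - apply (continuous2_ex_RInt (fun a b => h a b + - h z b)).
    apply continuous2_plus; [exact H|]. apply continuous2_opp.
    intros w. apply (continuous_comp (fun w : R * R => snd w) (fun b => h z b));
      [destruct w; apply continuous_snd|apply continuous2_slice; auto].
  - intros t Ht. apply Rlt_le. apply (Hd z t x t); try lra.
    rewrite Rminus_diag, Rabs_R0. apply cond_pos.
Qed.

Lemma L2Khat_le (G : R -> R -> C) (B : R) : Ccontinuous2 G -> 0 <= B ->
  (forall x y, in_Khat x y -> Cmod (G x y) <= B) -> L2Khat G <= B.
Proof.
  intros [G1 G2] HB Hb.
  set (h := fun x y => fst (G x y) ^ 2 + snd (G x y) ^ 2).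
  assert (Hh : continuous2 h) by (apply continuous2_plus; apply continuous2_pow; auto).
  assert (Eh : forall x y, Cmod (G x y) ^ 2 = h x y).
  { intros x y. unfold h, Cmod. rewrite pow2_sqrt; [ring|].
    pose proof (pow2_ge_0 (fst (G x y))). pose proof (pow2_ge_0 (snd (G x y))). lra. }
  assert (HB2 : RInt (fun _ => B ^ 2) 0 1 = B ^ 2)
    by (rewrite RInt_const; unfold scal; simpl; unfold mult; simpl; ring).
  unfold L2Khat.
  rewrite (RInt_ext (fun x => RInt (fun y => Cmod (G x y) ^ 2) 0 1) (fun x => RInt (fun y => h x y) 0 1))
    by (intros x _; apply RInt_ext; intros; apply Eh).
  rewrite <- (sqrt_pow2 B HB). apply sqrt_le_1_alt. rewrite <- HB2.
  apply RInt_le; [lra| |apply ex_RInt_const|].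
  - apply (@ex_RInt_continuous R_CompleteNormedModule). intros; apply RInt_inner_continuous; auto.
  - intros x Hx. rewrite <- HB2.
    apply RInt_le; [lra|apply continuous2_ex_RInt; auto|apply ex_RInt_const|].
    intros y Hy. rewrite <- Eh. pose proof (Hb x y ltac:(unfold in_Khat; lra)).
    pose proof (Cmod_ge_0 (G x y)). simpl. nra.
Qed.

Lemma RInt_affine_sq (w c : R) : RInt (fun y => (w + c * y) ^ 2) 0 1 = w ^ 2 + w * c + c ^ 2 / 3.
Proof.
  apply is_RInt_unique.
  set (F := fun y => w ^ 2 * y + w * c * y ^ 2 + c ^ 2 * y ^ 3 / 3).
  replace (w ^ 2 + w * c + c ^ 2 / 3) with (minus (F 1) (F 0))
    by (unfold F, minus, plus, opp; simpl; field).
  apply (is_RInt_derive (V := R_CompleteNormedModule) F).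
  - intros y _. unfold F. auto_derive; auto. field.
  - intros y _. apply (ex_derive_continuous (K := R_AbsRing) (V := R_NormedModule)).
    unfold F. auto_derive. auto.
Qed.

Lemma L2Khat_affine (a b c : R) :
  L2Khat (fun x y => RtoC (a + b * x + c * y))
  = sqrt ((a + b / 2 + c / 2) ^ 2 + b ^ 2 / 12 + c ^ 2 / 12).
Proof.
  unfold L2Khat. f_equal.
  rewrite (RInt_ext _ (fun x => (a + b * x) ^ 2 + (a + b * x) * c + c ^ 2 / 3)).
  2: { intros x _. rewrite <- RInt_affine_sq. apply RInt_ext. intros y _.
       rewrite Cmod_R, pow2_abs. reflexivity. }
  apply is_RInt_unique.
  set (F := fun x => a ^ 2 * x + a * b * x ^ 2 + b ^ 2 * x ^ 3 / 3 + a * c * x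
                     + b * c * x ^ 2 / 2 + c ^ 2 / 3 * x).
  replace ((a + b / 2 + c / 2) ^ 2 + b ^ 2 / 12 + c ^ 2 / 12) with (minus (F 1) (F 0))
    by (unfold F, minus, plus, opp; simpl; field).
  apply (is_RInt_derive (V := R_CompleteNormedModule) F).
  - intros x _. unfold F. auto_derive; auto. field.
  - intros x _. apply (ex_derive_continuous (K := R_AbsRing) (V := R_NormedModule)).
    unfold F. auto_derive. auto.
Qed.

(** * Best approximation error *)

Lemma best_approx_err_le kap e p q (f : R -> R -> R) (cf : nat -> C) :
  Rbar_le (best_approx_err kap e p q f)
          (L2Khat (fun x y => Cminus (RtoC (f x y)) (gpw_comb kap e p q cf x y))).
Proof. destruct (Glb_Rbar_correct (fun r => exists c : nat -> C, r = L2Khat (fun x y =>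
         Cminus (RtoC (f x y)) (gpw_comb kap e p q c x y)))) as [Hlb _].
  apply Hlb. exists cf. reflexivity.
Qed.

Lemma best_approx_err_le_norm kap e p q (f : R -> R -> R) :
  Rbar_le (best_approx_err kap e p q f) (L2Khat (fun x y => RtoC (f x y))).
Proof.
  replace (fun x y => RtoC (f x y))
    with (fun x y => Cminus (RtoC (f x y)) (gpw_comb kap e p q (fun _ => RtoC 0) x y))
    by (apply functional_extensionality; intros x; apply functional_extensionality; intros y;
        unfold gpw_comb; rewrite csum_eq0 by (intros; ring); ring).
  apply best_approx_err_le.
Qed.

Lemma affine_coeffs_abs_le (a b c : R) :
  Rabs (a + b / 2 + c / 2) + Rabs b + Rabs c
    <= 6 * sqrt ((a + b / 2 + c / 2) ^ 2 + b ^ 2 / 12 + c ^ 2 / 12).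
Proof.
  set (u := a + b / 2 + c / 2).
  rewrite <- (sqrt_pow2 (Rabs u + Rabs b + Rabs c))
    by (pose proof (Rabs_pos u); pose proof (Rabs_pos b); pose proof (Rabs_pos c); lra).
  rewrite <- (sqrt_pow2 6) by lra. rewrite <- sqrt_mult_alt by lra.
  apply sqrt_le_1_alt. rewrite <- (pow2_abs u), <- (pow2_abs b), <- (pow2_abs c).
  pose proof (pow2_ge_0 (Rabs u - Rabs b)). pose proof (pow2_ge_0 (Rabs b - Rabs c)).
  pose proof (pow2_ge_0 (Rabs u - Rabs c)). simpl in *. nra.
Qed.

Lemma best_approx_err_small_kappa (e : R -> R -> R) (p q : nat) :
  0 < e xK yK -> (1 <= q)%nat -> (4 <= p)%nat ->
  exists K k1, 0 < k1 /\
  forall kap, 0 < kap <= k1 -> forall a b c : R,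
    Rbar_le (best_approx_err kap e p q (fun x y => a + b * x + c * y))
            (K * kap ^ 2 * L2Khat (fun x y => RtoC (a + b * x + c * y))).
Proof.
  intros He Hq Hp. destruct (gpw_comb_approx_affine e p q He Hq Hp) as [K [k1 [HK [Hk1 Happrox]]]].
  exists (6 * K), k1. split; [exact Hk1|]. intros kap Hk a b c.
  set (u := a + b / 2 + c / 2).
  eapply Rbar_le_trans;
    [apply (best_approx_err_le _ _ _ _ _ (approx_coeff p kap (sqrt (e xK yK)) u b c))|]. cbn [Rbar_le].
  assert (Hk2 : 0 < kap ^ 2) by (apply pow_lt; lra).
  assert (Hsum : 0 <= Rabs u + Rabs b + Rabs c)
    by (pose proof (Rabs_pos u); pose proof (Rabs_pos b); pose proof (Rabs_pos c); lra).
  eapply Rle_trans; [apply (L2Khat_le _ (K * (Rabs u + Rabs b + Rabs c) * kap ^ 2))|].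
  - apply (Ccontinuous2_minus (fun x y => RtoC (a + b * x + c * y))); [|apply gpw_comb_Ccontinuous2].
    apply Ccontinuous2_RtoC. repeat apply continuous2_plus;
      auto using continuous2_const, continuous2_mult, continuous2_x, continuous2_y.
  - apply Rmult_le_pos; [apply Rmult_le_pos|]; lra.
  - intros x y Hxy. replace (a + b * x + c * y) with (u + b * (x - xK) + c * (y - yK))
      by (unfold u, xK, yK; field).
    apply Happrox; auto.
  - rewrite L2Khat_affine. pose proof (affine_coeffs_abs_le a b c). fold u in H |- *.
    replace (6 * K * kap ^ 2 * sqrt (u ^ 2 + b ^ 2 / 12 + c ^ 2 / 12))
      with (K * kap ^ 2 * (6 * sqrt (u ^ 2 + b ^ 2 / 12 + c ^ 2 / 12))) by ring.
    replace (K * (Rabs u + Rabs b + Rabs c) * kap ^ 2)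
      with (K * kap ^ 2 * (Rabs u + Rabs b + Rabs c)) by ring.
    apply Rmult_le_compat_l; [nra|exact H].
Qed.

Lemma Rmax_threshold_bounds (K k1 e0 kap : R) : 0 < k1 -> 0 < e0 -> 0 < kap ->
  K * kap ^ 2 <= Rmax (K / e0) (1 / (k1 ^ 2 * e0)) * kap ^ 2 * e0 /\
  (k1 < kap -> 1 <= Rmax (K / e0) (1 / (k1 ^ 2 * e0)) * kap ^ 2 * e0).
Proof.
  intros Hk1 He Hk. assert (Hk2 : 0 < kap ^ 2) by (apply pow_lt; lra). split.
  - replace (K * kap ^ 2) with (K / e0 * kap ^ 2 * e0) by (field; lra).
    apply Rmult_le_compat_r; [lra|]. apply Rmult_le_compat_r; [lra|apply Rmax_l].
  - intros Hlarge.
    assert (1 <= 1 / (k1 ^ 2 * e0) * kap ^ 2 * e0).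
    { replace (1 / (k1 ^ 2 * e0) * kap ^ 2 * e0) with ((kap / k1) ^ 2) by (field; lra).
      rewrite <- (pow1 2). apply pow_incr. split; [lra|].
      apply (Rmult_le_reg_r k1); [lra|]. unfold Rdiv. rewrite Rmult_assoc, Rinv_l; lra. }
    eapply Rle_trans; [eassumption|].
    apply Rmult_le_compat_r; [lra|]. apply Rmult_le_compat_r; [lra|apply Rmax_r].
Qed.

Theorem lemma2 :
  forall (eps : R -> R -> R),
    smooth_on_Khat eps ->
    (forall x y, in_Khat x y -> 0 < eps x y) ->
  forall (n q : nat), (2 <= n)%nat -> (n + 1 <= q)%nat ->
  exists Cst : R,
  forall kap : R, 0 < kap ->
  forall a b c : R,
    let f := fun x y : R => (a + b * x + c * y)%R in
    Rbar_le (best_approx_err kap eps (2 * n + 1) q f)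
      (Finite (Cst * kap ^ 2 * Rabs (eps xK yK) * L2Khat (fun x y => RtoC (f x y)))).
Proof.
  intros eps _ Hpos n q Hn Hq.
  assert (He : 0 < eps xK yK) by (apply Hpos; unfold in_Khat, xK, yK; lra).
  destruct (best_approx_err_small_kappa eps (2 * n + 1) q He ltac:(lia) ltac:(lia))
    as [K [k1 [Hk1 Hsmall]]].
  exists (Rmax (K / eps xK yK) (1 / (k1 ^ 2 * eps xK yK))).
  intros kap Hk a b c f. rewrite Rabs_pos_eq by lra.
  destruct (Rmax_threshold_bounds K k1 (eps xK yK) kap Hk1 He Hk) as [Hsmall_cst Hlarge_cst].
  assert (HL : 0 <= L2Khat (fun x y => RtoC (f x y))) by apply sqrt_pos.
  destruct (Rle_dec kap k1) as [Hsmall_kap|Hlarge_kap].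
  - eapply Rbar_le_trans; [apply Hsmall; lra|]. cbn [Rbar_le].
    apply Rmult_le_compat_r; assumption.
  - eapply Rbar_le_trans; [apply best_approx_err_le_norm|]. cbn [Rbar_le].
    rewrite <- (Rmult_1_l (L2Khat _)) at 1.
    apply Rmult_le_compat_r; [assumption|apply Hlarge_cst; lra].
Qed.
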